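(* Let $\xi(s)=\pi^{-s/2}\Gamma(s/2)\zeta(s)$, $\chi(s)=s(s-1)\xi(s)$, $A=\pi/3-1$, and \[ \begin{aligned} Z_2(s) & = (s-2)\chi(2s) \Bigl[ (As + 3)(s-1)^2\chi(s+2) - 2(s-1)(s-3)\chi(s+1) - (s+2)(s-3)\chi(s) \Bigr] \\ & \quad - (s+1) \chi(2s-1) \Bigl[ (As - A - 3)s^2\chi(s-2) + 2s(s+2) \, \chi(s-1) + (s+2)(s-3)\chi(s) \Bigr]. \end{aligned} \] Then $Z_2(s)$ has no zero in the half-plane $\mathrm{Re}(s)\geq 20$. *)

From Stdlib Require Import Reals.
From Coquelicot Require Import Coquelicot.
Open Scope C_scope.

Definition cexp (z : C) : C :=
  (exp (Re z) * cos (Im z), exp (Re z) * sin (Im z))%R.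

Definition cpowR (x : R) (z : C) : C := cexp (z * RtoC (ln x)).

(* Euler's integral: Gamma z = int_0^oo t^(z-1) e^(-t) dt  (valid for Re z > 0) *)
Definition Gamma (z : C) : C :=
  RInt_gen (V := C_R_CompleteNormedModule)
    (fun t : R => cpowR t (z - 1) * RtoC (exp (- t)))
    (at_right 0) (Rbar_locally p_infty).

(* Dirichlet series: zeta s = sum_{n>=1} n^(-s)  (valid for Re s > 1) *)
Definition zeta (s : C) : C :=
  iota (T := C_CompleteNormedModule)
    (fun l : C => is_series (V := C_NormedModule)
                    (fun n : nat => / cpowR (INR n + 1) s) l).

Definition xi (s : C) : C := cpowR PI (- s / 2) * Gamma (s / 2) * zeta s.

Definition chi (s : C) : C := s * (s - 1) * xi s.

Definition A : C := RtoC (PI / 3 - 1).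

Definition Z2 (s : C) : C :=
  (s - 2) * chi (2 * s) *
    ((A * s + 3) * (s - 1) ^ 2 * chi (s + 2)
     - 2 * (s - 1) * (s - 3) * chi (s + 1)
     - (s + 2) * (s - 3) * chi s)
  - (s + 1) * chi (2 * s - 1) *
    ((A * s - A - 3) * s ^ 2 * chi (s - 2)
     + 2 * s * (s + 2) * chi (s - 1)
     + (s + 2) * (s - 3) * chi s).

From Stdlib Require Import Reals Lra Lia Factorial.
From Coquelicot Require Import Coquelicot.
Open Scope C_scope.

(* For [Re s >= 20] the term [(s - 2) chi(2s) (A s + 3) (s - 1)^2 chi(s + 2)] of [Z2] outweighs the
   five others together.  In each ratio the powers of [pi] are explicit, the values of [zeta] lie
   within [10^-3] of 1 since [|zeta u - 1| <= 4 * 2 ^ (- Re u)], and the values of [Gamma] are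
   compared through [Gamma (w + 1) = w Gamma w] and the half-step bound
   [|Gamma w|^2 (Re w - 1/4) <= |Gamma (w + 1/2)|^2].  These properties of [Gamma], and its
   non-vanishing, come from Euler's integral through Gauss's product formula
   [Gamma w = lim n^w n! / (w (w + 1) ... (w + n))], obtained by replacing [exp (- t)] with
   [(1 - t/n)^n] on [[0, n]]. *)

Lemma exp_le_mono (a b : R) : (a <= b)%R -> (exp a <= exp b)%R.
Proof.
  intros H. destruct (Rle_lt_or_eq_dec a b H) as [h|h].
  - left; apply exp_increasing; auto.
  - rewrite h; lra.
Qed.

Lemma cexp_add (a b : C) : cexp (a + b) = cexp a * cexp b.
Proof.
  destruct a as [a1 a2], b as [b1 b2]. unfold cexp, Cmult, Cplus; simpl.
  rewrite exp_plus, cos_plus, sin_plus. f_equal; ring.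
Qed.

Lemma Cmod_cexp (z : C) : Cmod (cexp z) = exp (Re z).
Proof.
  destruct z as [a b]. unfold Cmod, cexp, Re, Im. cbn [fst snd].
  replace ((exp a * cos b) ^ 2 + (exp a * sin b) ^ 2)%R with ((exp a) ^ 2)%R.
  - rewrite sqrt_pow2; auto. left; apply exp_pos.
  - pose proof (sin2_cos2 b) as E. unfold Rsqr in E. nra.
Qed.

Lemma cpowR_cos_sin (t : R) (z : C) : cpowR t z =
  ((exp (Re z * ln t) * cos (Im z * ln t))%R, (exp (Re z * ln t) * sin (Im z * ln t))%R).
Proof.
  destruct z as [a b]. unfold cpowR, cexp, Cmult, RtoC, Re, Im; simpl.
  f_equal; f_equal; try f_equal; ring.
Qed.

Lemma cpowR_add (t : R) (a b : C) : cpowR t (a + b) = cpowR t a * cpowR t b.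
Proof. unfold cpowR. rewrite <- cexp_add. f_equal. ring. Qed.

Lemma Cmod_cpowR (t : R) (z : C) : Cmod (cpowR t z) = exp (Re z * ln t).
Proof. unfold cpowR. rewrite Cmod_cexp. destruct z; simpl. f_equal. ring. Qed.

Lemma cpowR_neq0 (t : R) (z : C) : cpowR t z <> 0.
Proof.
  intro E. assert (M : Cmod (cpowR t z) = 0%R) by (rewrite E; apply Cmod_0).
  rewrite Cmod_cpowR in M. pose proof (exp_pos (Re z * ln t)). lra.
Qed.

Lemma cpowR_1 (t : R) : (0 < t)%R -> cpowR t 1 = RtoC t.
Proof.
  intros ht. rewrite cpowR_cos_sin. simpl.
  rewrite Rmult_0_l, cos_0, sin_0, Rmult_1_l, exp_ln by exact ht.
  unfold RtoC. f_equal; ring.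
Qed.

Lemma cpowR_plus_1 (t : R) (z : C) : (0 < t)%R -> cpowR t (z + 1) = t * cpowR t z.
Proof. intros. rewrite cpowR_add, cpowR_1 by auto. ring. Qed.

Lemma cpowR_1_l (z : C) : cpowR 1 z = 1.
Proof.
  rewrite cpowR_cos_sin, ln_1, !Rmult_0_r, exp_0, cos_0, sin_0, !Rmult_1_l. reflexivity.
Qed.

Lemma is_derive_pair (f1 f2 : R -> R) (x d1 d2 : R) :
  is_derive f1 x d1 -> is_derive f2 x d2 ->
  is_derive (V := C_R_NormedModule) (fun t => ((f1 t, f2 t) : C)) x ((d1, d2) : C).
Proof.
  intros H1 H2. unfold is_derive in *.
  apply (filterdiff_comp'_2 f1 f2 (fun u v => ((u, v) : C)) x _ _ (fun u v => ((u, v) : C)) H1 H2).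
  apply (filterdiff_ext_lin _ (fun t => t)).
  - apply filterdiff_ext with (fun t => t); [intros [u v]; reflexivity | apply filterdiff_id].
  - intros [u v]; reflexivity.
Qed.

Lemma is_derive_cpowR (t : R) (w : C) : (0 < t)%R ->
  is_derive (V := C_R_NormedModule) (fun u => cpowR u w) t (w * cpowR t (w - 1)).
Proof.
  intros ht. destruct w as [a b].
  apply is_derive_ext with (fun u => ((exp (a * ln u) * cos (b * ln u))%R,
                                        (exp (a * ln u) * sin (b * ln u))%R) : C).
  { intros u. rewrite cpowR_cos_sin. reflexivity. }
  assert (Epred : (exp (a * ln t) * / t = exp ((a - 1) * ln t))%R).
  { replace ((a - 1) * ln t)%R with (a * ln t + - ln t)%R by ring.
    rewrite exp_plus, exp_Ropp, exp_ln; auto. }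
  replace ((a, b) * cpowR t ((a, b) - 1)) with
    (((exp (a * ln t) * / t * (a * cos (b * ln t)) - exp (a * ln t) * / t * (b * sin (b * ln t)))%R,
      (exp (a * ln t) * / t * (a * sin (b * ln t))
       + exp (a * ln t) * / t * (b * cos (b * ln t)))%R) : C).
  2:{ rewrite cpowR_cos_sin. replace (Re ((a, b) - 1)) with (a - 1)%R by (simpl; ring).
      replace (Im ((a, b) - 1)) with b by (simpl; ring).
      rewrite <- Epred. unfold Cmult; simpl. f_equal; ring. }
  apply is_derive_pair; auto_derive; auto; field; lra.
Qed.

Lemma continuous_cpowR (t : R) (w : C) : (0 < t)%R -> continuous (fun u => cpowR u w) t.
Proof.
  intros. apply (ex_derive_continuous (V := C_R_NormedModule)).
  eexists. apply is_derive_cpowR; auto.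
Qed.

Lemma minus_C (a b : C) : @minus C_R_NormedModule a b = a - b.
Proof. destruct a, b; reflexivity. Qed.

Lemma plus_C (a b : C) : @plus C_R_NormedModule a b = a + b.
Proof. destruct a, b; reflexivity. Qed.

Lemma opp_C (a : C) : @opp C_R_NormedModule a = - a.
Proof. destruct a; reflexivity. Qed.

Lemma scal_C (k : R) (a : C) : @scal R_Ring C_R_ModuleSpace k a = a * RtoC k.
Proof.
  destruct a; unfold scal; simpl. unfold Cmult, RtoC; simpl.
  unfold ModuleSpace.scal; simpl. unfold prod_scal; simpl. unfold scal; simpl.
  unfold mult; simpl. f_equal; ring.
Qed.

Lemma norm_C (z : C) : @norm R_AbsRing C_R_NormedModule z = Cmod z.
Proof.
  destruct z as [p q]. unfold norm; simpl. unfold prod_norm, Cmod; simpl.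
  unfold norm; simpl. unfold abs; simpl. f_equal. rewrite !Rmult_1_r.
  pose proof (Rsqr_abs p); pose proof (Rsqr_abs q); unfold Rsqr in *; lra.
Qed.

Lemma Cmod_lt_ball (x y : C) (e : R) : (Cmod (y - x) < e)%R -> @ball C_UniformSpace x e y.
Proof.
  intros H. destruct x as [x1 x2], y as [y1 y2].
  pose proof (Rmax_Cmod ((y1, y2) - (x1, x2))) as Hm. simpl in Hm.
  split; simpl; unfold ball; simpl; unfold AbsRing_ball; simpl; unfold abs, minus, plus, opp; simpl.
  - eapply Rle_lt_trans; [|apply H]. eapply Rle_trans; [|apply Hm]. apply Rmax_l.
  - eapply Rle_lt_trans; [|apply H]. eapply Rle_trans; [|apply Hm]. apply Rmax_r.
Qed.

Lemma ball_Cmod_lt (x y : C) (e : R) : @ball C_UniformSpace x e y -> (Cmod (y - x) < 2 * e)%R.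
Proof.
  destruct x as [x1 x2], y as [y1 y2]. intros [H1 H2].
  unfold ball in H1, H2; simpl in H1, H2.
  unfold AbsRing_ball, abs, minus, plus, opp in H1, H2; simpl in H1, H2.
  pose proof (Cmod_2Rmax ((y1, y2) - (x1, x2))) as Hc. simpl in Hc.
  assert (Hs : (sqrt 2 < 2)%R).
  { rewrite <- (sqrt_pow2 2) at 2 by lra. apply sqrt_lt_1; lra. }
  assert (Rmax (Rabs (y1 + - x1)) (Rabs (y2 + - x2)) < e)%R by (apply Rmax_lub_lt; auto).
  pose proof (Rmax_l (Rabs (y1 + - x1)) (Rabs (y2 + - x2))). pose proof (Rabs_pos (y1 + - x1)).
  assert (0 < sqrt 2)%R by (apply sqrt_lt_R0; lra).
  eapply Rle_lt_trans. apply Hc. nra.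
Qed.

Lemma eq0_of_Cmod_le_all (z : C) : (forall eps, (0 < eps)%R -> (Cmod z <= eps)%R) -> z = 0.
Proof.
  intros H. destruct (Req_dec (Cmod z) 0) as [E|E].
  - apply Cmod_eq_0; auto.
  - pose proof (Cmod_ge_0 z). specialize (H (Cmod z / 2)%R ltac:(lra)). lra.
Qed.

Lemma Re_le_Cmod (w : C) : (Re w <= Cmod w)%R.
Proof. pose proof (re_le_Cmod w). pose proof (Rle_abs (Re w)). lra. Qed.

Lemma le_of_pow2_le (u v : R) : (0 <= u)%R -> (0 <= v)%R -> (u ^ 2 <= v ^ 2)%R -> (u <= v)%R.
Proof. intros. nra. Qed.

Lemma sqrt_ge (c v : R) : (0 <= c)%R -> (c ^ 2 <= v)%R -> (c <= sqrt v)%R.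
Proof. intros hc hv. rewrite <- (sqrt_pow2 c hc). apply sqrt_le_1_alt. auto. Qed.

Lemma Cmod_le_of_sq (z w : C) : (Cmod z ^ 2 <= Cmod w ^ 2)%R -> (Cmod z <= Cmod w)%R.
Proof. apply le_of_pow2_le; apply Cmod_ge_0. Qed.

Lemma Cmod_mult_RtoC (r : R) (z : C) : Cmod (z * RtoC r) = (Cmod z * Rabs r)%R.
Proof. rewrite Cmod_mult, Cmod_R; auto. Qed.

Lemma is_RInt_Cmult (f : R -> C) (a b : R) (l c : C) :
  is_RInt (V := C_R_NormedModule) f a b l ->
  is_RInt (V := C_R_NormedModule) (fun t => c * f t) a b (c * l).
Proof.
  intros H.
  pose proof (is_RInt_fct_extend_fst (U := R_NormedModule) (V := R_NormedModule) f a b l H) as H1.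
  pose proof (is_RInt_fct_extend_snd (U := R_NormedModule) (V := R_NormedModule) f a b l H) as H2.
  destruct c as [c1 c2].
  apply (is_RInt_ext (V := C_R_NormedModule)
    (fun t => ((c1 * fst (f t) - c2 * snd (f t))%R, (c1 * snd (f t) + c2 * fst (f t))%R) : C)).
  { intros t _. unfold Cmult; simpl. f_equal; ring. }
  replace ((c1, c2) * l) with (((c1 * fst l - c2 * snd l)%R, (c1 * snd l + c2 * fst l)%R) : C).
  2:{ unfold Cmult; simpl. f_equal; ring. }
  apply (is_RInt_fct_extend_pair (U := R_NormedModule) (V := R_NormedModule)); simpl.
  - apply (is_RInt_minus (V := R_NormedModule)); apply (is_RInt_scal (V := R_NormedModule)); auto.
  - apply (is_RInt_plus (V := R_NormedModule)); apply (is_RInt_scal (V := R_NormedModule)); auto.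
Qed.

Lemma is_RInt_Cminus (f g : R -> C) (a b : R) (l1 l2 : C) :
  is_RInt (V := C_R_NormedModule) f a b l1 ->
  is_RInt (V := C_R_NormedModule) g a b l2 ->
  is_RInt (V := C_R_NormedModule) (fun t => f t - g t) a b (l1 - l2).
Proof.
  intros. rewrite <- minus_C.
  apply (is_RInt_ext (V := C_R_NormedModule) (fun t => @minus C_R_NormedModule (f t) (g t))).
  { intros; apply minus_C. }
  apply (is_RInt_minus (V := C_R_NormedModule)); auto.
Qed.

Lemma is_RInt_C_unique (f : R -> C) a b l1 l2 :
  is_RInt (V := C_R_NormedModule) f a b l1 -> is_RInt (V := C_R_NormedModule) f a b l2 -> l1 = l2.
Proof.
  intros H1 H2. apply (is_RInt_unique (V := C_R_CompleteNormedModule)) in H1.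
  apply (is_RInt_unique (V := C_R_CompleteNormedModule)) in H2. congruence.
Qed.

Lemma Cmod_RInt_le_sq (f : R -> C) (a : R) (l : C) : (0 <= a)%R ->
  (forall t, (0 <= t <= a)%R -> (Cmod (f t) <= a)%R) ->
  is_RInt (V := C_R_NormedModule) f 0 a l -> (Cmod l <= a * a)%R.
Proof.
  intros ha Hf Hl. rewrite <- norm_C. replace (a * a)%R with ((a - 0) * a)%R by ring.
  apply (norm_RInt_le_const (V := C_R_NormedModule) f 0 a); auto.
  intros t Ht. rewrite norm_C. auto.
Qed.

(** * Euler's integral over a bounded interval *)

(* [t ^ z] extended by 0 to [t <= 0]; for [Re z >= 1] it is continuous on all of [R],
   so the integrals from 0 below are ordinary Riemann integrals. *)
Definition tpow (t : R) (z : C) : C := if Rlt_dec 0 t then cpowR t z else 0.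

Lemma tpow_pos t z : (0 < t)%R -> tpow t z = cpowR t z.
Proof. intros. unfold tpow. destruct Rlt_dec; auto; lra. Qed.

Lemma tpow_npos t z : (t <= 0)%R -> tpow t z = 0.
Proof. intros. unfold tpow. destruct Rlt_dec; auto; lra. Qed.

Lemma exp_mul_ln_le (a x : R) : (0 < a <= 1)%R -> (1 <= x)%R -> (exp (x * ln a) <= a)%R.
Proof.
  intros [h0 h1] hx.
  assert (ln a <= 0)%R by (rewrite <- ln_1; apply ln_le; auto).
  rewrite <- (exp_ln a) at 2 by auto. apply exp_le_mono. nra.
Qed.

Lemma Cmod_tpow_le t z : (0 <= t <= 1)%R -> (1 <= Re z)%R -> (Cmod (tpow t z) <= t)%R.
Proof.
  intros ht hz. destruct (Rlt_dec 0 t).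
  - rewrite tpow_pos, Cmod_cpowR by auto. apply exp_mul_ln_le; lra.
  - rewrite tpow_npos, Cmod_0; lra.
Qed.

Lemma Cmod_tpow t z : (0 < t)%R -> Cmod (tpow t z) = exp (Re z * ln t).
Proof. intros. rewrite tpow_pos, Cmod_cpowR; auto. Qed.

Lemma tpow_plus_1 (t : R) (w : C) : tpow t (w + 1 - 1) = RtoC t * tpow t (w - 1).
Proof.
  destruct (Rlt_dec 0 t).
  - rewrite !tpow_pos by auto. replace (w + 1 - 1) with ((w - 1) + 1) by ring.
    apply cpowR_plus_1; auto.
  - rewrite !tpow_npos by lra. ring.
Qed.

Lemma continuous_tpow (t : R) (z : C) : (1 <= Re z)%R -> continuous (fun u => tpow u z) t.
Proof.
  intros hz. destruct (Rtotal_order t 0) as [Hlt|[Heq|Hgt]].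
  - apply (continuous_ext_loc (T := R_UniformSpace) (U := C_UniformSpace) _ (fun _ => (0 : C))).
    + exists (mkposreal (- t) ltac:(lra)). intros y Hy. unfold ball in Hy; simpl in Hy.
      unfold AbsRing_ball, abs, minus, plus, opp in Hy; simpl in Hy.
      apply Rabs_def2 in Hy. rewrite tpow_npos; auto. lra.
    + apply continuous_const.
  - subst. intros P HP. unfold filtermap. rewrite tpow_npos in HP by lra.
    destruct HP as [eps Heps].
    exists (mkposreal (Rmin 1 eps) ltac:(destruct eps; simpl; apply Rmin_pos; lra)).
    intros y Hy. apply Heps. unfold ball in Hy; simpl in Hy.
    unfold AbsRing_ball, abs, minus, plus, opp in Hy; simpl in Hy.
    rewrite Ropp_0, Rplus_0_r in Hy. apply Rabs_def2 in Hy.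
    destruct (Rle_dec y 0).
    + rewrite tpow_npos; auto. apply ball_center.
    + apply Cmod_lt_ball. replace (tpow y z - 0) with (tpow y z) by ring.
      pose proof (Rmin_l 1 eps). pose proof (Rmin_r 1 eps).
      eapply Rle_lt_trans; [apply Cmod_tpow_le|]; auto; lra.
  - apply (continuous_ext_loc (T := R_UniformSpace) (U := C_UniformSpace) _ (fun u => cpowR u z)).
    + exists (mkposreal t Hgt). intros y Hy. unfold ball in Hy; simpl in Hy.
      unfold AbsRing_ball, abs, minus, plus, opp in Hy; simpl in Hy.
      apply Rabs_def2 in Hy. rewrite tpow_pos; auto. lra.
    + apply continuous_cpowR; auto.
Qed.

Lemma continuous_tpow_mult (z : C) (g : R -> R) (x : R) : (1 <= Re z)%R -> continuous g x ->
  continuous (fun t => tpow t z * RtoC (g t)) x.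
Proof.
  intros hz hg.
  apply (continuous_ext (T := R_UniformSpace) (U := C_UniformSpace)
          (fun t => @scal R_Ring C_R_ModuleSpace (g t) (tpow t z))).
  { intros; apply scal_C. }
  apply (continuous_scal (K := R_AbsRing) (V := C_R_NormedModule)); auto.
  apply continuous_tpow; auto.
Qed.

Lemma ex_RInt_tpow (z : C) (a b : R) : (1 <= Re z)%R ->
  ex_RInt (V := C_R_CompleteNormedModule) (fun t => tpow t z) a b.
Proof.
  intros hz. apply (ex_RInt_continuous (V := C_R_CompleteNormedModule)).
  intros; apply continuous_tpow; auto.
Qed.

Lemma Re_sub_1 (w : C) : Re (w - 1) = (Re w - 1)%R.
Proof. destruct w; simpl; ring. Qed.

Lemma Re_add_1 (w : C) : Re (w + 1) = (Re w + 1)%R.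
Proof. destruct w; simpl; ring. Qed.

Lemma Re_add_INR (w : C) (n : nat) : Re (w + INR n) = (Re w + INR n)%R.
Proof. destruct w; simpl; ring. Qed.

Lemma Im_add_INR (w : C) (n : nat) : Im (w + INR n) = Im w.
Proof. destruct w; simpl; ring. Qed.

Lemma neq0_of_Re_pos (w : C) : (0 < Re w)%R -> w <> 0.
Proof. intros hw E. rewrite E in hw. simpl in hw. lra. Qed.

Lemma is_RInt_cpowR_pred (w : C) (a b : R) : w <> 0 -> (0 < a)%R -> (a <= b)%R ->
  is_RInt (V := C_R_NormedModule) (fun t => cpowR t (w - 1)) a b ((cpowR b w - cpowR a w) / w).
Proof.
  intros hw ha hab.
  assert (H : is_RInt (V := C_R_NormedModule) (fun t => w * cpowR t (w - 1)) a b
                (cpowR b w - cpowR a w)).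
  { rewrite <- minus_C.
    apply (is_RInt_derive (V := C_R_CompleteNormedModule) (fun u => cpowR u w)).
    - intros x Hx. rewrite Rmin_left, Rmax_right in Hx; auto. apply is_derive_cpowR. lra.
    - intros x Hx. rewrite Rmin_left, Rmax_right in Hx; auto.
      apply (continuous_scal_r (K := C_AbsRing) (V := C_NormedModule)).
      apply continuous_cpowR; lra. }
  apply (is_RInt_Cmult _ _ _ _ (/ w)) in H.
  apply (is_RInt_ext (V := C_R_NormedModule)) with (fun t => / w * (w * cpowR t (w - 1))).
  { intros x _. rewrite Cmult_assoc, Cinv_l, Cmult_1_l; auto. }
  replace ((cpowR b w - cpowR a w) / w) with (/ w * (cpowR b w - cpowR a w)) by (field; auto).
  auto.
Qed.

(* The integral over [0, a] tends to 0 with [a]: split [0, b] at a small [a]. *)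
Lemma is_RInt_tpow_0 (w : C) (b : R) : (2 <= Re w)%R -> (0 < b)%R ->
  is_RInt (V := C_R_NormedModule) (fun t => tpow t (w - 1)) 0 b (cpowR b w / w).
Proof.
  intros hw hb.
  assert (hw1 : (1 <= Re (w - 1))%R) by (rewrite Re_sub_1; lra).
  assert (hw0 : w <> 0) by (apply neq0_of_Re_pos; lra).
  destruct (ex_RInt_tpow (w - 1) 0 b hw1) as [I HI].
  replace (cpowR b w / w) with I; auto.
  apply Ceq_minus, eq0_of_Cmod_le_all. intros eps heps.
  set (a := (Rmin (Rmin 1 b) eps / 2)%R).
  assert (ha : (0 < a /\ a <= 1 /\ a <= b /\ a <= eps / 2)%R).
  { unfold a. pose proof (Rmin_l (Rmin 1 b) eps). pose proof (Rmin_r (Rmin 1 b) eps).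
    pose proof (Rmin_l 1 b). pose proof (Rmin_r 1 b).
    assert (0 < Rmin (Rmin 1 b) eps)%R by (apply Rmin_pos; [apply Rmin_pos|]; lra). lra. }
  destruct (ex_RInt_tpow (w - 1) 0 a hw1) as [J HJ].
  assert (Hab : is_RInt (V := C_R_NormedModule) (fun t => tpow t (w - 1)) a b
                  ((cpowR b w - cpowR a w) / w)).
  { apply (is_RInt_ext (V := C_R_NormedModule) (fun t => cpowR t (w - 1))).
    - intros t Ht. rewrite Rmin_left, Rmax_right in Ht by lra. rewrite tpow_pos; auto. lra.
    - apply is_RInt_cpowR_pred; auto; lra. }
  pose proof (is_RInt_Chasles (V := C_R_NormedModule) _ _ _ _ _ _ HJ Hab) as HC.
  rewrite plus_C in HC. rewrite (is_RInt_C_unique _ _ _ _ _ HI HC).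
  replace (J + (cpowR b w - cpowR a w) / w - cpowR b w / w) with (J - cpowR a w / w)
    by (field; auto).
  assert (HJn : (Cmod J <= a * a)%R).
  { apply (Cmod_RInt_le_sq (fun t => tpow t (w - 1)) a J); try lra; auto.
    intros t Ht. eapply Rle_trans; [apply Cmod_tpow_le|]; lra. }
  assert (Hpn : (Cmod (cpowR a w / w) <= a)%R).
  { rewrite Cmod_div, Cmod_cpowR by auto. pose proof (Re_le_Cmod w).
    pose proof (exp_mul_ln_le a (Re w) ltac:(lra) ltac:(lra)).
    pose proof (exp_pos (Re w * ln a)).
    apply Rle_trans with (exp (Re w * ln a) / 1)%R; [|lra].
    apply Rmult_le_compat_l; [lra|]. apply Rinv_le_contravar; lra. }
  unfold Cminus. eapply Rle_trans; [apply Cmod_triangle|]. rewrite Cmod_opp. nra.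
Qed.

(* [m + 1] factors: [w (w + 1) ... (w + m)]. *)
Fixpoint rising (w : C) (m : nat) : C :=
  match m with 0 => w | S m' => rising w m' * (w + INR (S m')) end.

Lemma rising_S (w : C) (m : nat) : rising w (S m) = w * rising (w + 1) m.
Proof.
  induction m as [|m IH].
  - simpl. ring.
  - change (rising w (S (S m))) with (rising w (S m) * (w + INR (S (S m)))).
    rewrite IH. change (rising (w + 1) (S m)) with (rising (w + 1) m * (w + 1 + INR (S m))).
    rewrite (S_INR (S m)), RtoC_plus. ring.
Qed.

Lemma add_INR_neq0 (w : C) (n : nat) : (0 < Re w)%R -> w + INR n <> 0.
Proof.
  intros hw. apply neq0_of_Re_pos. rewrite Re_add_INR. pose proof (pos_INR n). lra.
Qed.

Lemma rising_neq0 (w : C) (m : nat) : (0 < Re w)%R -> rising w m <> 0.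
Proof.
  intros hw. induction m as [|m IH].
  - apply neq0_of_Re_pos; auto.
  - apply Cmult_neq_0; auto. apply add_INR_neq0; auto.
Qed.

(* Integrating by parts in [w], i.e. through [t ^ w = t * t ^ (w - 1)]. *)
Lemma is_RInt_beta (m : nat) : forall (w : C) (b : R), (2 <= Re w)%R -> (0 < b)%R ->
  is_RInt (V := C_R_NormedModule) (fun t => tpow t (w - 1) * RtoC ((1 - t / b) ^ m))
    0 b (cpowR b w * INR (fact m) / rising w m).
Proof.
  induction m as [|m IH]; intros w b hw hb.
  - apply (is_RInt_ext (V := C_R_NormedModule) (fun t => tpow t (w - 1))).
    { intros; simpl. ring. }
    simpl. replace (cpowR b w * 1 / w) with (cpowR b w / w) by (unfold Cdiv; ring).
    apply is_RInt_tpow_0; auto.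
  - pose proof (IH w b hw hb) as H1.
    pose proof (IH (w + 1) b ltac:(rewrite Re_add_1; lra) hb) as H2.
    apply (is_RInt_Cmult _ _ _ _ (RtoC (/ b))) in H2.
    pose proof (is_RInt_Cminus _ _ _ _ _ _ H1 H2) as H3.
    replace (cpowR b w * INR (fact (S m)) / rising w (S m)) with
      (cpowR b w * INR (fact m) / rising w m -
       RtoC (/ b) * (cpowR b (w + 1) * INR (fact m) / rising (w + 1) m)).
    + apply (is_RInt_ext (V := C_R_NormedModule)) with (2 := H3).
      intros t _. rewrite tpow_plus_1. simpl pow.
      destruct (tpow t (w - 1)) as [p q]. unfold RtoC, Cmult, Cminus, Cplus, Copp; simpl.
      f_equal; field; lra.
    + assert (Hn1 : w + INR (S m) <> 0) by (apply add_INR_neq0; lra).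
      assert (Hp : rising (w + 1) m <> 0) by (apply rising_neq0; rewrite Re_add_1; lra).
      assert (Hw : w <> 0) by (apply neq0_of_Re_pos; lra).
      assert (E : rising w m = w * rising (w + 1) m / (w + INR (S m))).
      { rewrite <- rising_S. change (rising w (S m)) with (rising w m * (w + INR (S m))).
        field; auto. }
      assert (hb0 : RtoC b <> 0) by (intro X; apply RtoC_inj in X; lra).
      rewrite rising_S, E, cpowR_plus_1, fact_simpl, mult_INR, RtoC_mult, RtoC_inv by lra.
      field. repeat split; auto.
Qed.

Definition gauss_seq (n : nat) (w : C) : C := cpowR (INR n) w * INR (fact n) / rising w n.

(** * Gauss's product formula for [Gamma] *)

Section Real_estimates.
Local Open Scope R_scope.

Lemma exp_pow_nat (a : R) (k : nat) : exp a ^ k = exp (INR k * a).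
Proof.
  induction k as [|k IH].
  - simpl. rewrite Rmult_0_l, exp_0; auto.
  - rewrite S_INR. simpl. rewrite IH, <- exp_plus. f_equal. ring.
Qed.

Lemma pow_div_le_exp (u : R) (k : nat) : 0 <= u -> (1 <= k)%nat -> (u / INR k) ^ k <= exp u.
Proof.
  intros hu hk. assert (hk' : 0 < INR k) by (apply lt_0_INR; lia).
  replace u with (INR k * (u / INR k)) at 2 by (field; lra).
  rewrite <- exp_pow_nat. apply pow_incr. split.
  - apply Rmult_le_pos; auto. left; apply Rinv_0_lt_compat; auto.
  - pose proof (exp_ineq1_le (u / INR k)). lra.
Qed.

(* Through [t ^ k <= (2 k) ^ k e ^ (t / 2)] for an integer [k >= r]. *)
Lemma rpow_le_exp_half (r : R) : 0 <= r ->
  exists K, 0 < K /\ forall t, 0 < t -> exp (r * ln t) <= K * exp (t / 2).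
Proof.
  intros hr. destruct (INR_archimed 1 r ltac:(lra)) as [n Hn].
  set (k := S n). assert (hk : (1 <= k)%nat) by (unfold k; lia).
  assert (hrk : r <= INR k) by (unfold k; rewrite S_INR; lra).
  assert (hk' : 0 < INR k) by (apply lt_0_INR; lia).
  pose proof (pow_le (2 * INR k) k ltac:(lra)) as Hc.
  exists (1 + (2 * INR k) ^ k). split; [lra|].
  intros t ht. pose proof (exp_pos (t / 2)). pose proof (exp_ineq1_le (t / 2)).
  destruct (Rle_lt_dec t 1).
  - assert (ln t <= 0) by (rewrite <- ln_1; apply ln_le; lra).
    assert (exp (r * ln t) <= 1) by (rewrite <- exp_0; apply exp_le_mono; nra).
    nra.
  - assert (0 < ln t) by (rewrite <- ln_1; apply ln_increasing; lra).
    assert (exp (r * ln t) <= t ^ k).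
    { rewrite <- (exp_ln (t ^ k)) by (apply pow_lt; lra). rewrite ln_pow by lra.
      apply exp_le_mono. nra. }
    assert (t ^ k = (2 * INR k) ^ k * ((t / 2) / INR k) ^ k).
    { rewrite <- Rpow_mult_distr. f_equal. field. lra. }
    pose proof (pow_div_le_exp (t / 2) k ltac:(lra) hk). nra.
Qed.

Lemma bernoulli_le (h : R) (n : nat) : 0 <= h <= 1 -> 1 - INR n * h <= (1 - h) ^ n.
Proof.
  intros hh. induction n as [|n IH].
  - simpl. lra.
  - rewrite S_INR. simpl. assert (0 <= (1 - h) ^ n) by (apply pow_le; lra).
    pose proof (pos_INR n).
    assert (0 <= (1 - h) * ((1 - h) ^ n - (1 - INR n * h))) by (apply Rmult_le_pos; lra).
    assert (0 <= INR n * h * h) by (apply Rmult_le_pos; [apply Rmult_le_pos|]; lra). nra.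
Qed.

Lemma exp_sub_pow_bounds (t : R) (n : nat) : (1 <= n)%nat -> 0 <= t <= INR n ->
  0 <= exp (- t) - (1 - t / INR n) ^ n <= t ^ 2 * exp (- t) / INR n.
Proof.
  intros hn ht. set (h := t / INR n). assert (hn' : 0 < INR n) by (apply lt_0_INR; lia).
  assert (h0 : 0 <= h <= 1).
  { unfold h. split; [apply Rmult_le_pos; [lra| left; apply Rinv_0_lt_compat; lra]|].
    apply (Rmult_le_reg_r (INR n)); auto. field_simplify; lra. }
  assert (Em : exp (- t) = exp (- h) ^ n) by (rewrite exp_pow_nat; unfold h; f_equal; field; lra).
  assert (Ep : exp t = exp h ^ n) by (rewrite exp_pow_nat; unfold h; f_equal; field; lra).
  split.
  - rewrite Em. assert (0 <= 1 - h <= exp (- h)) by (pose proof (exp_ineq1_le (- h)); lra).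
    pose proof (pow_incr _ _ n H). lra.
  - (* [e^t (1 - h)^n >= (1 + h)^n (1 - h)^n = (1 - h^2)^n >= 1 - n h^2] *)
    assert (H1 : (1 + h) ^ n <= exp t).
    { rewrite Ep. apply pow_incr. pose proof (exp_ineq1_le h). lra. }
    assert (H2 : (1 + h) ^ n * (1 - h) ^ n = (1 - h ^ 2) ^ n).
    { rewrite <- Rpow_mult_distr. f_equal. ring. }
    assert (H3 : 1 - INR n * h ^ 2 <= (1 - h ^ 2) ^ n) by (apply bernoulli_le; nra).
    assert (H4 : INR n * h ^ 2 = t ^ 2 / INR n) by (unfold h; field; lra).
    assert (H5 : 0 <= (1 - h) ^ n) by (apply pow_le; lra).
    assert (Hx : exp t * exp (- t) = 1) by (rewrite <- exp_plus, Rplus_opp_r, exp_0; auto).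
    pose proof (exp_pos (- t)).
    assert (exp t * (1 - h) ^ n >= 1 - t ^ 2 / INR n) by nra.
    assert ((1 - h) ^ n >= exp (- t) * (1 - t ^ 2 / INR n)).
    { replace ((1 - h) ^ n) with (exp (- t) * (exp t * (1 - h) ^ n)) by
        (rewrite <- Rmult_assoc, (Rmult_comm (exp (- t))), Hx; ring).
      apply Rle_ge, Rmult_le_compat_l; lra. }
    unfold Rdiv in *. nra.
Qed.

Lemma is_RInt_exp_half (K u v : R) :
  is_RInt (fun t => K * exp (- t / 2)) u v (2 * K * (exp (- u / 2) - exp (- v / 2))).
Proof.
  replace (2 * K * (exp (- u / 2) - exp (- v / 2))) with
    (minus ((- 2 * K) * exp (- v / 2)) ((- 2 * K) * exp (- u / 2))).
  2:{ unfold minus, plus, opp; simpl. ring. }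
  apply (is_RInt_derive (fun t => (- 2 * K) * exp (- t / 2))).
  - intros; auto_derive; auto. replace (- x * / 2) with (- x / 2) by reflexivity. field.
  - intros. apply (ex_derive_continuous (fun t => K * exp (- t / 2))). auto_derive; auto.
Qed.

Lemma exp_half_small (c eps : R) : 0 < c -> 0 < eps ->
  exists M, 0 <= M /\ forall u, M <= u -> c * exp (- u / 2) < eps.
Proof.
  intros hc he. exists (Rmax 0 (2 * ln (2 * c / eps))). split; [apply Rmax_l|].
  intros u hu. pose proof (Rmax_r 0 (2 * ln (2 * c / eps))).
  assert (exp (- u / 2) <= exp (- ln (2 * c / eps))) by (apply exp_le_mono; lra).
  rewrite exp_Ropp, exp_ln in H0 by (apply Rdiv_lt_0_compat; lra).
  replace (/ (2 * c / eps)) with (eps / (2 * c)) in H0 by (field; lra).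
  apply Rle_lt_trans with (c * (eps / (2 * c))); [apply Rmult_le_compat_l; lra|].
  replace (c * (eps / (2 * c))) with (eps / 2) by (field; lra). lra.
Qed.

End Real_estimates.

Definition gamma_integrand (w : C) (t : R) : C := tpow t (w - 1) * RtoC (exp (- t)).

Definition partial_gamma (w : C) (c : R) : C :=
  RInt (V := C_R_CompleteNormedModule) (gamma_integrand w) 0 c.

Lemma is_RInt_partial_gamma (w : C) (c : R) : (2 <= Re w)%R ->
  is_RInt (V := C_R_NormedModule) (gamma_integrand w) 0 c (partial_gamma w c).
Proof.
  intros hw. apply (RInt_correct (V := C_R_CompleteNormedModule)).
  apply (ex_RInt_continuous (V := C_R_CompleteNormedModule)). intros z _.
  apply continuous_tpow_mult; [rewrite Re_sub_1; lra|].
  apply (ex_derive_continuous (fun t => exp (- t))). auto_derive; auto.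
Qed.

Lemma is_RInt_partial_gamma_sub (w : C) (u v : R) : (2 <= Re w)%R ->
  is_RInt (V := C_R_NormedModule) (gamma_integrand w) u v (partial_gamma w v - partial_gamma w u).
Proof.
  intros hw. pose proof (is_RInt_partial_gamma w u hw) as Hu.
  pose proof (is_RInt_partial_gamma w v hw) as Hv.
  apply (is_RInt_swap (V := C_R_NormedModule)) in Hu.
  pose proof (is_RInt_Chasles (V := C_R_NormedModule) _ _ _ _ _ _ Hu Hv) as H.
  rewrite plus_C, opp_C in H. replace (partial_gamma w v - partial_gamma w u) with
    (- partial_gamma w u + partial_gamma w v) by ring. exact H.
Qed.

Lemma exp_neg_split (t : R) : exp (- t) = (exp (- t / 2) * exp (- t / 2))%R.
Proof. rewrite <- exp_plus. f_equal. lra. Qed.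

Lemma Cmod_gamma_integrand_le (w : C) : (2 <= Re w)%R ->
  exists K, (0 < K)%R /\ forall t, (0 <= t)%R ->
    (Cmod (gamma_integrand w t) <= K * exp (- t / 2))%R.
Proof.
  intros hw. destruct (rpow_le_exp_half (Re w - 1) ltac:(lra)) as [K [hK HK]].
  exists K. split; auto. intros t ht. unfold gamma_integrand.
  rewrite Cmod_mult_RtoC, Rabs_right by (left; apply exp_pos).
  pose proof (exp_pos (- t / 2)). destruct ht as [ht|<-].
  - rewrite Cmod_tpow, Re_sub_1, exp_neg_split by auto. specialize (HK t ht).
    replace (exp (t / 2)) with (/ exp (- t / 2))%R in HK
      by (rewrite <- exp_Ropp; f_equal; field).
    apply (Rmult_le_compat_r (exp (- t / 2) * exp (- t / 2))) in HK; [|nra].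
    replace (K * / exp (- t / 2) * (exp (- t / 2) * exp (- t / 2)))%R with
      (K * exp (- t / 2))%R in HK by (field; lra). lra.
  - rewrite tpow_npos, Cmod_0 by lra. pose proof (exp_pos (- 0)). nra.
Qed.

Lemma partial_gamma_cauchy (w : C) : (2 <= Re w)%R ->
  exists K, (0 < K)%R /\ forall u v, (0 <= u <= v)%R ->
    (Cmod (partial_gamma w v - partial_gamma w u) <= 2 * K * exp (- u / 2))%R.
Proof.
  intros hw. destruct (Cmod_gamma_integrand_le w hw) as [K [hK HK]]. exists K; split; auto.
  intros u v huv. rewrite <- norm_C.
  eapply Rle_trans.
  - apply (norm_RInt_le (V := C_R_NormedModule) (gamma_integrand w)
             (fun t => K * exp (- t / 2))%R u v).
    + lra.
    + intros t Ht. rewrite norm_C. apply HK. lra.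
    + apply is_RInt_partial_gamma_sub; auto.
    + apply is_RInt_exp_half.
  - pose proof (exp_pos (- v / 2)). nra.
Qed.

Lemma partial_gamma_has_lim (w : C) : (2 <= Re w)%R ->
  exists L : C, filterlim (partial_gamma w) (Rbar_locally p_infty) (locally L).
Proof.
  intros hw. destruct (partial_gamma_cauchy w hw) as [K [hK HK]].
  apply (filterlim_locally_cauchy (U := C_R_CompleteNormedModule) (F := Rbar_locally p_infty)).
  intros eps. destruct (exp_half_small (2 * K) eps ltac:(lra) (cond_pos eps)) as [M [hM HM]].
  exists (fun u => M < u)%R. split; [exists M; auto|].
  intros u v hu hv. apply Cmod_lt_ball.
  destruct (Rle_dec u v).
  - eapply Rle_lt_trans; [apply HK; lra | apply HM; lra].
  - rewrite <- Cmod_opp.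
    replace (- (partial_gamma w v - partial_gamma w u)) with
      (partial_gamma w u - partial_gamma w v) by ring.
    eapply Rle_lt_trans; [apply HK; lra | apply HM; lra].
Qed.

Lemma Cmod_partial_gamma_le (w : C) (a : R) : (2 <= Re w)%R -> (0 <= a <= 1)%R ->
  (Cmod (partial_gamma w a) <= a * a)%R.
Proof.
  intros hw ha. apply (Cmod_RInt_le_sq (gamma_integrand w)); try lra.
  2: apply is_RInt_partial_gamma; auto.
  intros t Ht. unfold gamma_integrand. rewrite Cmod_mult_RtoC, Rabs_right by (left; apply exp_pos).
  pose proof (Cmod_tpow_le t (w - 1) ltac:(lra) ltac:(rewrite Re_sub_1; lra)).
  assert (exp (- t) <= 1)%R by (rewrite <- exp_0; apply exp_le_mono; lra).
  pose proof (Cmod_ge_0 (tpow t (w - 1))). nra.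
Qed.

(* [Gamma] is an improper integral at both ends; near 0 the integrand is bounded by [t]. *)
Lemma Gamma_lim_partial (w L : C) : (2 <= Re w)%R ->
  filterlim (partial_gamma w) (Rbar_locally p_infty) (locally L) -> Gamma w = L.
Proof.
  intros hw HL. unfold Gamma.
  apply (is_RInt_gen_unique (V := C_R_CompleteNormedModule) (Fa := at_right 0)
           (Fb := Rbar_locally p_infty)).
  unfold is_RInt_gen, filterlimi, filter_le, filtermapi. intros P [eps HP].
  assert (he4 : (0 < eps / 4)%R) by (destruct eps; simpl; lra).
  destruct (HL (ball L (eps / 4)) (locally_ball L (mkposreal _ he4))) as [M HM].
  assert (hd : (0 < Rmin 1 (eps / 2))%R) by (apply Rmin_pos; destruct eps; simpl; lra).
  pose proof (Rmin_l 1 (eps / 2)). pose proof (Rmin_r 1 (eps / 2)).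
  apply Filter_prod with (fun a => 0 < a < Rmin 1 (eps / 2))%R (fun b => Rmax M 1 < b)%R.
  - exists (mkposreal _ hd). intros y Hy hy. simpl in *.
    unfold ball in Hy; simpl in Hy; unfold AbsRing_ball, abs, minus, plus, opp in Hy; simpl in Hy.
    rewrite Ropp_0, Rplus_0_r in Hy. apply Rabs_def2 in Hy. lra.
  - exists (Rmax M 1). auto.
  - intros a b [ha1 ha2] hb. simpl. pose proof (Rmax_l M 1). pose proof (Rmax_r M 1).
    exists (partial_gamma w b - partial_gamma w a). split.
    + apply (is_RInt_ext (V := C_R_NormedModule) (gamma_integrand w)).
      * intros t Ht. rewrite Rmin_left, Rmax_right in Ht by lra.
        unfold gamma_integrand. rewrite tpow_pos; auto. lra.
      * apply is_RInt_partial_gamma_sub; auto.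
    + apply HP, Cmod_lt_ball.
      specialize (HM b ltac:(lra)). apply ball_Cmod_lt in HM.
      pose proof (Cmod_partial_gamma_le w a hw ltac:(lra)).
      replace (partial_gamma w b - partial_gamma w a - L) with
        ((partial_gamma w b - L) + - partial_gamma w a) by ring.
      eapply Rle_lt_trans; [apply Cmod_triangle|]. rewrite Cmod_opp. simpl in HM. nra.
Qed.

Lemma Cmod_tpow_exp_sub_pow_le (w : C) (K t : R) (n : nat) :
  (2 <= Re w)%R -> (1 <= n)%nat -> (0 <= t <= INR n)%R ->
  (forall t, 0 < t -> exp ((Re w + 1) * ln t) <= K * exp (t / 2))%R ->
  (Cmod (tpow t (w - 1) * RtoC (exp (- t) - (1 - t / INR n) ^ n))
     <= K / INR n * exp (- t / 2))%R.
Proof.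
  intros hw hn Ht HK.
  assert (hn' : (0 < INR n)%R) by (apply lt_0_INR; lia).
  pose proof (exp_sub_pow_bounds t n hn Ht) as [E1 E2].
  rewrite Cmod_mult_RtoC, Rabs_right by lra.
  pose proof (exp_pos (- t / 2)).
  destruct (proj1 Ht) as [ht|<-].
  - rewrite Cmod_tpow, Re_sub_1 by auto. specialize (HK t ht).
    assert (Ex : (exp ((Re w - 1) * ln t) * t ^ 2 = exp ((Re w + 1) * ln t))%R).
    { replace ((Re w + 1) * ln t)%R with ((Re w - 1) * ln t + ln (t ^ 2))%R
        by (rewrite ln_pow by lra; simpl INR; ring).
      rewrite exp_plus, exp_ln by (apply pow_lt; lra). ring. }
    replace (exp (t / 2)) with (/ exp (- t / 2))%R in HK by (rewrite <- exp_Ropp; f_equal; field).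
    pose proof (exp_pos ((Re w - 1) * ln t)).
    apply Rle_trans with (exp ((Re w - 1) * ln t) * (t ^ 2 * exp (- t) / INR n))%R;
      [apply Rmult_le_compat_l; lra|].
    replace (exp ((Re w - 1) * ln t) * (t ^ 2 * exp (- t) / INR n))%R with
      (exp ((Re w + 1) * ln t) * exp (- t / 2) * exp (- t / 2) / INR n)%R
      by (rewrite <- Ex, exp_neg_split; field; lra).
    replace (K / INR n * exp (- t / 2))%R with
      (K * / exp (- t / 2) * exp (- t / 2) * exp (- t / 2) / INR n)%R by (field; lra).
    unfold Rdiv. apply Rmult_le_compat_r; [left; apply Rinv_0_lt_compat; auto|].
    apply Rmult_le_compat_r; [lra|]. apply Rmult_le_compat_r; lra.
  - rewrite tpow_npos, Cmod_0 by lra.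
    assert (0 <= K / INR n)%R.
    { pose proof (HK 1%R Rlt_0_1). pose proof (exp_pos ((Re w + 1) * ln 1)).
      pose proof (exp_pos (1 / 2)). apply Rdiv_le_0_compat; nra. }
    nra.
Qed.

(* The Beta-type integral [is_RInt_beta] is the truncation of Euler's integral
   with [exp (- t)] replaced by [(1 - t / n) ^ n]. *)
Lemma partial_gamma_gauss_seq (w : C) : (2 <= Re w)%R ->
  exists K, (0 < K)%R /\ forall n : nat, (1 <= n)%nat ->
    (Cmod (partial_gamma w (INR n) - gauss_seq n w) <= 2 * K / INR n)%R.
Proof.
  intros hw. destruct (rpow_le_exp_half (Re w + 1) ltac:(lra)) as [K [hK HK]].
  exists K; split; auto. intros n hn.
  assert (hn' : (0 < INR n)%R) by (apply lt_0_INR; lia).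
  assert (HI : is_RInt (V := C_R_NormedModule)
     (fun t => tpow t (w - 1) * RtoC (exp (- t) - (1 - t / INR n) ^ n)) 0 (INR n)
     (partial_gamma w (INR n) - gauss_seq n w)).
  { apply (is_RInt_ext (V := C_R_NormedModule)) with
      (2 := is_RInt_Cminus _ _ _ _ _ _ (is_RInt_partial_gamma w (INR n) hw)
                                       (is_RInt_beta n w (INR n) hw hn')).
    intros t _. unfold gamma_integrand. rewrite RtoC_minus.
    match goal with |- ?a = ?b => change (@eq C a b) end. ring. }
  rewrite <- norm_C. eapply Rle_trans.
  - apply (norm_RInt_le (V := C_R_NormedModule)
             (fun t => tpow t (w - 1) * RtoC (exp (- t) - (1 - t / INR n) ^ n))
             (fun t => (K / INR n) * exp (- t / 2))%R 0 (INR n));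
      [lra| | exact HI | apply is_RInt_exp_half].
    intros t Ht. rewrite norm_C. apply Cmod_tpow_exp_sub_pow_le; auto.
  - pose proof (exp_pos (- INR n / 2)). replace (- 0 / 2)%R with 0%R by field. rewrite exp_0.
    assert (0 <= K / INR n)%R by (apply Rdiv_le_0_compat; lra).
    replace (2 * K / INR n)%R with (2 * (K / INR n) * 1)%R by (field; lra). nra.
Qed.

Definition Cseq_lim (u : nat -> C) (l : C) : Prop := is_lim_seq (fun n => Cmod (u n - l)) 0%R.

Lemma gauss_seq_lim (w : C) : (2 <= Re w)%R -> Cseq_lim (fun n => gauss_seq n w) (Gamma w).
Proof.
  intros hw. destruct (partial_gamma_has_lim w hw) as [L HL].
  rewrite (Gamma_lim_partial w L hw HL).
  destruct (partial_gamma_gauss_seq w hw) as [K [hK HK]].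
  apply is_lim_seq_spec. intros eps.
  assert (he4 : (0 < eps / 4)%R) by (destruct eps; simpl; lra).
  destruct (HL (ball L (eps / 4)) (locally_ball L (mkposreal _ he4))) as [M HM].
  destruct (INR_archimed 1 M ltac:(lra)) as [N1 HN1].
  destruct (INR_archimed (eps / 2) (2 * K) ltac:(destruct eps; simpl; lra)) as [N2 HN2].
  exists (S (N1 + N2)). intros n hn.
  assert (hn1 : (1 <= n)%nat) by lia.
  assert (h1 : (INR N1 <= INR n)%R) by (apply le_INR; lia).
  assert (h2 : (INR N2 <= INR n)%R) by (apply le_INR; lia).
  assert (hn' : (0 < INR n)%R) by (apply lt_0_INR; lia).
  specialize (HM (INR n) ltac:(lra)). apply ball_Cmod_lt in HM. simpl in HM.
  specialize (HK n hn1).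
  assert (2 * K / INR n < eps / 2)%R.
  { apply (Rmult_lt_reg_r (INR n)); auto. unfold Rdiv.
    rewrite Rmult_assoc, Rinv_l by lra. destruct eps; simpl in *; nra. }
  rewrite Rminus_0_r, Rabs_pos_eq by apply Cmod_ge_0.
  replace (gauss_seq n w - L) with
    ((partial_gamma w (INR n) - L) + - (partial_gamma w (INR n) - gauss_seq n w)) by ring.
  eapply Rle_lt_trans; [apply Cmod_triangle|]. rewrite Cmod_opp. lra.
Qed.

(** * The functional equation and a half-step bound for [Gamma] *)

Lemma Cseq_lim_Cmod (u : nat -> C) (l : C) :
  Cseq_lim u l -> is_lim_seq (fun n => Cmod (u n)) (Cmod l).
Proof.
  intros H.
  apply (is_lim_seq_le_le (fun n => Cmod l - Cmod (u n - l)) _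
           (fun n => Cmod l + Cmod (u n - l)))%R.
  - intros n. pose proof (Cmod_triangle (u n - l) l) as T1.
    pose proof (Cmod_triangle (l - u n) (u n)) as T2.
    replace (u n - l + l) with (u n) in T1 by ring.
    replace (l - u n + u n) with l in T2 by ring.
    rewrite <- (Cmod_opp (l - u n)) in T2. replace (- (l - u n)) with (u n - l) in T2 by ring.
    lra.
  - pose proof (is_lim_seq_minus' _ _ _ _ (is_lim_seq_const (Cmod l)) H) as L.
    rewrite Rminus_0_r in L. exact L.
  - pose proof (is_lim_seq_plus' _ _ _ _ (is_lim_seq_const (Cmod l)) H) as L.
    rewrite Rplus_0_r in L. exact L.
Qed.

Lemma Cseq_lim_unique (u : nat -> C) (l1 l2 : C) : Cseq_lim u l1 -> Cseq_lim u l2 -> l1 = l2.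
Proof.
  intros H1 H2. apply Ceq_minus, Cmod_eq_0, Rle_antisym; [|apply Cmod_ge_0].
  assert (Hs : is_lim_seq (fun n => Cmod (u n - l1) + Cmod (u n - l2))%R 0%R).
  { replace 0%R with (0 + 0)%R by ring. apply is_lim_seq_plus'; auto. }
  refine (is_lim_seq_le (fun _ => Cmod (l1 - l2)) _ _ _ _ (is_lim_seq_const _) Hs).
  intros n. pose proof (Cmod_triangle (- (u n - l1)) (u n - l2)) as T.
  rewrite Cmod_opp in T. replace (- (u n - l1) + (u n - l2)) with (l1 - l2) in T by ring.
  exact T.
Qed.

Lemma Cseq_lim_ext_loc (u v : nat -> C) (l : C) :
  (forall n, (1 <= n)%nat -> u n = v n) -> Cseq_lim u l -> Cseq_lim v l.
Proof.
  intros E H. refine (is_lim_seq_ext_loc _ _ _ _ H).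
  exists 1%nat. intros n hn. rewrite E; auto.
Qed.

Lemma Cseq_lim_scal (c : C) (u : nat -> C) (l : C) :
  Cseq_lim u l -> Cseq_lim (fun n => c * u n) (c * l).
Proof.
  intros H. apply (is_lim_seq_ext (fun n => Cmod c * Cmod (u n - l))%R).
  { intros n. rewrite <- Cmod_mult. f_equal. ring. }
  pose proof (is_lim_seq_scal_l _ (Cmod c) _ H) as L. simpl in L.
  rewrite Rmult_0_r in L. exact L.
Qed.

Lemma Cseq_lim_mult (u v : nat -> C) (l m : C) :
  Cseq_lim u l -> Cseq_lim v m -> Cseq_lim (fun n => u n * v n) (l * m).
Proof.
  intros Hu Hv. unfold Cseq_lim.
  apply (is_lim_seq_le_le (fun _ => 0%R) _ (fun n => Cmod (u n - l) * Cmod (v n - m)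
           + Cmod (u n - l) * Cmod m + Cmod l * Cmod (v n - m))%R).
  - intros n. split; [apply Cmod_ge_0|].
    replace (u n * v n - l * m) with
      ((u n - l) * (v n - m) + (u n - l) * m + l * (v n - m)) by ring.
    rewrite <- !Cmod_mult. eapply Rle_trans; [apply Cmod_triangle|].
    apply Rplus_le_compat_r, Cmod_triangle.
  - apply is_lim_seq_const.
  - replace 0%R with (0 * 0 + 0 * Cmod m + Cmod l * 0)%R by ring.
    apply is_lim_seq_plus'; [apply is_lim_seq_plus'|]; apply is_lim_seq_mult'; auto;
      apply is_lim_seq_const.
Qed.

Lemma Cseq_lim_add_INR_div_INR (c : C) : Cseq_lim (fun n => (c + INR n) / INR n) 1.
Proof.
  apply (is_lim_seq_ext_loc (fun n => Cmod c * / INR n)%R).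
  { exists 1%nat. intros n hn. assert (hn' : RtoC (INR n) <> 0)
      by (intro E; apply RtoC_inj in E; apply (lt_0_INR n) in hn; lra).
    replace ((c + INR n) / INR n - 1) with (c / INR n) by (field; auto).
    rewrite Cmod_div, Cmod_R, Rabs_pos_eq by (auto; apply pos_INR). reflexivity. }
  pose proof (is_lim_seq_inv _ _ is_lim_seq_INR ltac:(discriminate)) as L.
  apply (is_lim_seq_scal_l _ (Cmod c)) in L. simpl in L. rewrite Rmult_0_r in L. exact L.
Qed.

Lemma gauss_seq_plus_1 (n : nat) (w : C) : (1 <= n)%nat -> (0 < Re w)%R ->
  gauss_seq n (w + 1) * ((w + 1 + INR n) / INR n) = w * gauss_seq n w.
Proof.
  intros hn hw. unfold gauss_seq.
  assert (hn' : (0 < INR n)%R) by (apply lt_0_INR; lia).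
  assert (Hn : RtoC (INR n) <> 0) by (intro X; apply RtoC_inj in X; lra).
  assert (Hp : rising (w + 1) n <> 0) by (apply rising_neq0; rewrite Re_add_1; lra).
  assert (Hq : rising w n <> 0) by (apply rising_neq0; lra).
  assert (Hw : w <> 0) by (apply neq0_of_Re_pos; lra).
  assert (Hs : w + 1 + INR n <> 0).
  { replace (w + 1 + INR n) with ((w + 1) + INR n) by ring. apply add_INR_neq0.
    rewrite Re_add_1; lra. }
  assert (E : rising (w + 1) n = rising w n * (w + 1 + INR n) / w).
  { replace (w + 1 + INR n) with (w + INR (S n)) by (rewrite S_INR, RtoC_plus; ring).
    change (rising w n * (w + INR (S n))) with (rising w (S n)). rewrite rising_S.
    field; auto. }
  rewrite E, cpowR_plus_1 by auto. field. repeat split; auto.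
Qed.

Lemma Gamma_plus_1 (w : C) : (2 <= Re w)%R -> Gamma (w + 1) = w * Gamma w.
Proof.
  intros hw. apply (Cseq_lim_unique (fun n => gauss_seq n (w + 1) * ((w + 1 + INR n) / INR n))).
  - replace (Gamma (w + 1)) with (Gamma (w + 1) * 1) by ring.
    apply Cseq_lim_mult; [apply gauss_seq_lim; rewrite Re_add_1; lra|].
    apply Cseq_lim_add_INR_div_INR.
  - apply (Cseq_lim_ext_loc (fun n => w * gauss_seq n w)).
    + intros n hn. symmetry. apply gauss_seq_plus_1; auto; lra.
    + apply Cseq_lim_scal, gauss_seq_lim; auto.
Qed.

(* Each factor of [rising (w + 1/2) n] is compared to the matching factor of [rising w n]
   through [((a + 1/2)^2 + y^2) (a - 1/4) <= (a^2 + y^2) (a + 3/4)]. *)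
Lemma Cmod_rising_half_shift (w : C) (n : nat) : (1 <= Re w)%R ->
  (Cmod (rising (w + RtoC (1/2)) n) ^ 2 * (Re w - 1/4)
     <= Cmod (rising w n) ^ 2 * (Re w + INR n + 3/4))%R.
Proof.
  intros hw.
  assert (Hfac : forall k, (Cmod (w + RtoC (1/2) + INR k) ^ 2 * (Re w + INR k - 1/4)
                            <= Cmod (w + INR k) ^ 2 * (Re w + INR k + 3/4))%R).
  { intros k. rewrite !Cmod2_alt, !Re_add_INR, !Im_add_INR.
    replace (Re (w + RtoC (1/2))) with (Re w + 1/2)%R by (destruct w; simpl; ring).
    replace (Im (w + RtoC (1/2))) with (Im w) by (destruct w; simpl; ring).
    pose proof (pos_INR k). nra. }
  induction n as [|n IH].
  - pose proof (Hfac 0%nat) as H. simpl INR in *.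
    replace (w + RtoC (1/2) + 0) with (w + RtoC (1/2)) in H by (simpl; ring).
    replace (w + 0) with w in H by (simpl; ring).
    cbn [rising]. lra.
  - cbn [rising]. rewrite !Cmod_mult, !Rpow_mult_distr.
    pose proof (Hfac (S n)) as H. rewrite S_INR in *.
    set (A := (Cmod (rising (w + RtoC (1/2)) n) ^ 2)%R) in *.
    set (B := (Cmod (rising w n) ^ 2)%R) in *.
    set (a := (Cmod (w + RtoC (1/2) + (INR n + 1)%R) ^ 2)%R) in *.
    set (b := (Cmod (w + (INR n + 1)%R) ^ 2)%R) in *.
    assert (0 <= A)%R by apply pow2_ge_0. assert (0 <= B)%R by apply pow2_ge_0.
    assert (0 <= a)%R by apply pow2_ge_0. assert (0 <= b)%R by apply pow2_ge_0.
    replace (Re w + (INR n + 1) - 1/4)%R with (Re w + INR n + 3/4)%R in H by lra.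
    apply Rle_trans with (B * (Re w + INR n + 3/4) * a)%R.
    + replace (A * a * (Re w - 1/4))%R with (A * (Re w - 1/4) * a)%R by ring.
      apply Rmult_le_compat_r; auto.
    + replace (B * b * (Re w + (INR n + 1) + 3/4))%R with
        (B * (b * (Re w + (INR n + 1) + 3/4)))%R by ring.
      rewrite Rmult_assoc. apply Rmult_le_compat_l; auto; lra.
Qed.

Lemma Cmod_gauss_seq_half_shift (w : C) (n : nat) : (1 <= n)%nat -> (1 <= Re w)%R ->
  (Cmod (gauss_seq n w) ^ 2 * (INR n * (Re w - 1/4)) <=
   Cmod (gauss_seq n (w + RtoC (1/2))) ^ 2 * (Re w + INR n + 3/4))%R.
Proof.
  intros hn hw. assert (hn' : (0 < INR n)%R) by (apply lt_0_INR; lia).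
  assert (hA : rising (w + RtoC (1/2)) n <> 0) by (apply rising_neq0; destruct w; simpl in *; lra).
  assert (hB : rising w n <> 0) by (apply rising_neq0; lra).
  unfold gauss_seq. rewrite !Cmod_div by auto. rewrite !Cmod_mult, !Cmod_cpowR, !Cmod_R.
  replace (Re (w + RtoC (1/2))) with (Re w + 1/2)%R by (destruct w; simpl; ring).
  pose proof (Cmod_rising_half_shift w n hw) as H.
  set (A := Cmod (rising (w + RtoC (1/2)) n)) in *. set (B := Cmod (rising w n)) in *.
  assert (hA' : (0 < A)%R) by (apply Cmod_gt_0; auto).
  assert (hB' : (0 < B)%R) by (apply Cmod_gt_0; auto).
  set (E := exp (Re w * ln (INR n))). set (F := Rabs (INR (fact n))).
  assert (Es : (exp ((Re w + 1/2) * ln (INR n)) ^ 2 = E ^ 2 * INR n)%R).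
  { unfold E. rewrite !exp_pow_nat.
    transitivity (exp (INR 2 * (Re w * ln (INR n)) + ln (INR n))).
    - f_equal. simpl INR. field.
    - rewrite exp_plus, exp_ln; auto. }
  assert (hE : (0 < E)%R) by apply exp_pos.
  assert (hF : (0 <= F)%R) by apply Rabs_pos.
  replace (E * F / B)%R with (E * F * / B)%R by reflexivity.
  replace (exp ((Re w + 1 / 2) * ln (INR n)) * F / A)%R with
    (exp ((Re w + 1 / 2) * ln (INR n)) * F * / A)%R by reflexivity.
  rewrite !Rpow_mult_distr, Es.
  assert (Hg : ((Re w - 1/4) * / B ^ 2 <= (Re w + INR n + 3/4) * / A ^ 2)%R).
  { apply (Rmult_le_reg_r (A ^ 2 * B ^ 2)); [apply Rmult_lt_0_compat; apply pow_lt; auto|].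
    replace ((Re w - 1/4) * / B ^ 2 * (A ^ 2 * B ^ 2))%R with (A ^ 2 * (Re w - 1/4))%R
      by (field; lra).
    replace ((Re w + INR n + 3/4) * / A ^ 2 * (A ^ 2 * B ^ 2))%R with
      (B ^ 2 * (Re w + INR n + 3/4))%R by (field; lra).
    lra. }
  assert (hP : (0 <= E ^ 2 * F ^ 2 * INR n)%R)
    by (apply Rmult_le_pos; [apply Rmult_le_pos; apply pow2_ge_0 | lra]).
  replace (E ^ 2 * F ^ 2 * (/ B) ^ 2 * (INR n * (Re w - 1 / 4)))%R with
    ((E ^ 2 * F ^ 2 * INR n) * ((Re w - 1/4) * / B ^ 2))%R by (field; lra).
  replace (E ^ 2 * INR n * F ^ 2 * (/ A) ^ 2 * (Re w + INR n + 3 / 4))%R with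
    ((E ^ 2 * F ^ 2 * INR n) * ((Re w + INR n + 3/4) * / A ^ 2))%R by (field; lra).
  apply Rmult_le_compat_l; auto.
Qed.

(* Gauss's formula and [(Re w + n + 3/4) / n -> 1]; a log-convexity bound on [|Gamma|]. *)
Lemma Cmod_Gamma_half_shift (w : C) : (2 <= Re w)%R ->
  (Cmod (Gamma w) ^ 2 * (Re w - 1/4) <= Cmod (Gamma (w + RtoC (1/2))) ^ 2)%R.
Proof.
  intros hw. set (w' := w + RtoC (1/2)).
  assert (hw' : (2 <= Re w')%R) by (unfold w'; destruct w; simpl in *; lra).
  pose proof (Cseq_lim_Cmod _ _ (gauss_seq_lim w hw)) as H0.
  pose proof (Cseq_lim_Cmod _ _ (gauss_seq_lim w' hw')) as H1.
  pose proof (Cseq_lim_Cmod _ _ (Cseq_lim_add_INR_div_INR (RtoC (Re w + 3/4)))) as Hr.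
  rewrite Cmod_1 in Hr.
  assert (L0 : is_lim_seq (fun n => Cmod (gauss_seq n w) * Cmod (gauss_seq n w) * (Re w - 1/4))%R
                 (Cmod (Gamma w) * Cmod (Gamma w) * (Re w - 1/4))%R).
  { apply is_lim_seq_mult'; [apply is_lim_seq_mult'; auto | apply is_lim_seq_const]. }
  assert (L1 : is_lim_seq (fun n => Cmod (gauss_seq n w') * Cmod (gauss_seq n w') *
                                    Cmod ((RtoC (Re w + 3/4) + INR n) / INR n))%R
                 (Cmod (Gamma w') * Cmod (Gamma w') * 1)%R).
  { apply is_lim_seq_mult'; [apply is_lim_seq_mult'; auto | exact Hr]. }
  assert (Ev : eventually (fun n => Cmod (gauss_seq n w) * Cmod (gauss_seq n w) * (Re w - 1/4)
      <= Cmod (gauss_seq n w') * Cmod (gauss_seq n w') *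
         Cmod ((RtoC (Re w + 3/4) + INR n) / INR n))%R).
  { exists 1%nat. intros n hn. pose proof (Cmod_gauss_seq_half_shift w n hn ltac:(lra)) as G.
    assert (hn' : (0 < INR n)%R) by (apply lt_0_INR; lia).
    rewrite <- RtoC_plus, <- RtoC_div, Cmod_R, Rabs_pos_eq by
      (lra || apply Rdiv_le_0_compat; lra).
    apply (Rmult_le_reg_r (INR n)); auto. fold w'.
    replace (Cmod (gauss_seq n w') * Cmod (gauss_seq n w') * ((Re w + 3/4 + INR n) / INR n)
               * INR n)%R with (Cmod (gauss_seq n w') ^ 2 * (Re w + INR n + 3/4))%R
      by (field; lra).
    fold w' in G. nra. }
  pose proof (is_lim_seq_le_loc _ _ _ _ Ev L0 L1) as H. simpl in H. nra.
Qed.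

Fixpoint rising_R (x : R) (n : nat) : R :=
  match n with 0 => x | S m => (rising_R x m * (x + INR (S m)))%R end.

Lemma rising_R_pos (x : R) (n : nat) : (0 < x)%R -> (0 < rising_R x n)%R.
Proof.
  intros hx. induction n as [|n IH]; auto.
  cbn [rising_R]. apply Rmult_lt_0_compat; auto. pose proof (pos_INR (S n)). lra.
Qed.

Lemma sq_add_sq_le_exp (a y : R) : (2 <= a)%R ->
  (a ^ 2 + y ^ 2 <= a ^ 2 * exp (y ^ 2 * (/ (a - 1) - / a)))%R.
Proof.
  intros ha. replace (/ (a - 1) - / a)%R with (/ (a * (a - 1)))%R by (field; lra).
  pose proof (exp_ineq1_le (y ^ 2 * / (a * (a - 1)))).
  assert (a ^ 2 * (1 + y ^ 2 * / (a * (a - 1))) = a ^ 2 + y ^ 2 * (a / (a - 1)))%R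
    by (field; lra).
  assert (1 <= a / (a - 1))%R.
  { apply (Rmult_le_reg_r (a - 1)); [lra|]. unfold Rdiv. rewrite Rmult_assoc, Rinv_l by lra. lra. }
  assert (0 <= y ^ 2)%R by apply pow2_ge_0.
  assert (0 <= a ^ 2)%R by apply pow2_ge_0.
  assert (a ^ 2 * (1 + y ^ 2 * / (a * (a - 1))) <= a ^ 2 * exp (y ^ 2 * / (a * (a - 1))))%R
    by (apply Rmult_le_compat_l; auto).
  nra.
Qed.

(* The imaginary part costs at most a factor [exp (Im w ^ 2 / (Re w - 1))], by telescoping. *)
Lemma Cmod_rising_le (w : C) (n : nat) : (2 <= Re w)%R ->
  (Cmod (rising w n) ^ 2 <=
   rising_R (Re w) n ^ 2 * exp (Im w ^ 2 * (/ (Re w - 1) - / (Re w + INR n))))%R.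
Proof.
  intros hw. induction n as [|n IH].
  - cbn [rising rising_R]. rewrite Cmod2_alt. simpl INR. rewrite Rplus_0_r.
    apply sq_add_sq_le_exp; auto.
  - cbn [rising rising_R].
    rewrite Cmod_mult, Rpow_mult_distr, (Cmod2_alt (w + INR (S n))), Re_add_INR, Im_add_INR.
    set (a := (Re w + INR (S n))%R).
    pose proof (sq_add_sq_le_exp a (Im w) ltac:(unfold a; pose proof (pos_INR (S n)); lra)) as H.
    assert (E : (/ (Re w - 1) - / a =
                 (/ (Re w - 1) - / (Re w + INR n)) + (/ (a - 1) - / a))%R).
    { unfold a. rewrite S_INR. pose proof (pos_INR n). field. lra. }
    rewrite E, (Rmult_plus_distr_l (Im w ^ 2)), exp_plus, (Rpow_mult_distr (rising_R (Re w) n)).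
    set (c := exp (Im w ^ 2 * (/ (Re w - 1) - / (Re w + INR n)))) in *.
    assert (0 <= Cmod (rising w n) ^ 2)%R by apply pow2_ge_0.
    assert (0 <= rising_R (Re w) n ^ 2 * c)%R
      by (apply Rmult_le_pos; [apply pow2_ge_0 | left; apply exp_pos]).
    apply Rle_trans with (rising_R (Re w) n ^ 2 * c * (a ^ 2 + Im w ^ 2))%R.
    + apply Rmult_le_compat_r; auto. pose proof (pow2_ge_0 a). pose proof (pow2_ge_0 (Im w)). lra.
    + replace (rising_R (Re w) n ^ 2 * a ^ 2 * (c * exp (Im w ^ 2 * (/ (a - 1) - / a))))%R with
        (rising_R (Re w) n ^ 2 * c * (a ^ 2 * exp (Im w ^ 2 * (/ (a - 1) - / a))))%R by ring.
      apply Rmult_le_compat_l; auto.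
Qed.

Lemma ln_le_sub_1 (q : R) : (0 < q)%R -> (ln q <= q - 1)%R.
Proof.
  intros hq. rewrite <- (ln_exp (q - 1)). apply ln_le; auto. pose proof (exp_ineq1_le (q - 1)). lra.
Qed.

(* The real Gauss sequence [n ^ x n! / rising_R x n] is increasing. *)
Lemma rising_R_gauss_lower (x : R) (m : nat) : (1 <= x)%R ->
  (/ (x * (x + 1)) <= exp (x * ln (INR (S m))) * INR (fact (S m)) / rising_R x (S m))%R.
Proof.
  intros hx. induction m as [|m IH].
  - simpl. rewrite ln_1, Rmult_0_r, exp_0. right. field. lra.
  - set (N := INR (S m)). fold N in IH.
    assert (hN : (0 < N)%R) by (apply lt_0_INR; lia).
    assert (E1 : INR (S (S m)) = (N + 1)%R) by (unfold N; rewrite S_INR; auto).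
    change (rising_R x (S (S m))) with (rising_R x (S m) * (x + INR (S (S m))))%R.
    rewrite fact_simpl, mult_INR, E1.
    assert (hr : (0 < rising_R x (S m))%R) by (apply rising_R_pos; lra).
    assert (hF : (0 < INR (fact (S m)))%R) by (apply lt_0_INR, lt_O_fact).
    assert (Hln : (/ (N + 1) <= ln (N + 1) - ln N)%R).
    { pose proof (ln_le_sub_1 (N / (N + 1)) ltac:(apply Rdiv_lt_0_compat; lra)) as L.
      rewrite ln_div in L by lra.
      replace (N / (N + 1) - 1)%R with (- / (N + 1))%R in L by (field; lra). lra. }
    assert (Hex : (exp (x * ln N) * (x + (N + 1)) <= exp (x * ln (N + 1)) * (N + 1))%R).
    { replace (x * ln (N + 1))%R with (x * ln N + x * (ln (N + 1) - ln N))%R by ring.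
      rewrite exp_plus. pose proof (exp_ineq1_le (x * (ln (N + 1) - ln N))).
      pose proof (exp_pos (x * ln N)).
      assert (x * / (N + 1) <= x * (ln (N + 1) - ln N))%R by (apply Rmult_le_compat_l; lra).
      replace (x + (N + 1))%R with ((1 + x * / (N + 1)) * (N + 1))%R by (field; lra).
      rewrite <- Rmult_assoc. apply Rmult_le_compat_r; [lra|].
      apply Rmult_le_compat_l; lra. }
    eapply Rle_trans; [apply IH|].
    set (q := (INR (fact (S m)) / (rising_R x (S m) * (x + (N + 1))))%R).
    assert (0 <= q)%R by (apply Rlt_le, Rdiv_lt_0_compat; auto; apply Rmult_lt_0_compat; lra).
    replace (exp (x * ln (N + 1)) * ((N + 1) * INR (fact (S m)))
             / (rising_R x (S m) * (x + (N + 1))))%R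
      with ((exp (x * ln (N + 1)) * (N + 1)) * q)%R by (unfold q; field; lra).
    replace (exp (x * ln N) * INR (fact (S m)) / rising_R x (S m))%R with
      ((exp (x * ln N) * (x + (N + 1))) * q)%R by (unfold q; field; lra).
    apply Rmult_le_compat_r; auto.
Qed.

Lemma Cmod_gauss_seq_lower (w : C) (m : nat) : (2 <= Re w)%R ->
  (exp (- (Im w ^ 2 / (Re w - 1))) * (/ (Re w * (Re w + 1))) ^ 2
     <= Cmod (gauss_seq (S m) w) ^ 2)%R.
Proof.
  intros hw. set (x := Re w) in *. set (y := Im w).
  pose proof (Cmod_rising_le w (S m) hw) as H. fold x y in H.
  pose proof (rising_R_gauss_lower x m ltac:(lra)) as G.
  assert (hB : rising w (S m) <> 0) by (apply rising_neq0; unfold x in hw; lra).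
  assert (hB' : (0 < Cmod (rising w (S m)))%R) by (apply Cmod_gt_0; auto).
  assert (hr : (0 < rising_R x (S m))%R) by (apply rising_R_pos; lra).
  unfold gauss_seq. rewrite Cmod_div, Cmod_mult, Cmod_cpowR, Cmod_R, Rabs_right by
    (auto; apply Rle_ge, pos_INR). fold x.
  set (E := exp (x * ln (INR (S m)))). set (F := INR (fact (S m))).
  set (B := Cmod (rising w (S m))) in *. fold E F in G.
  assert (hE : (0 < E)%R) by apply exp_pos.
  assert (hF : (0 < F)%R) by (apply lt_0_INR, lt_O_fact).
  assert (Hc : (exp (y ^ 2 * (/ (x - 1) - / (x + INR (S m)))) <= exp (y ^ 2 / (x - 1)))%R).
  { apply exp_le_mono.
    assert (0 < / (x + INR (S m)))%R by (apply Rinv_0_lt_compat; pose proof (pos_INR (S m)); lra).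
    pose proof (pow2_ge_0 y). unfold Rdiv. nra. }
  set (c := exp (y ^ 2 / (x - 1))) in *.
  assert (hc : (0 < c)%R) by apply exp_pos.
  assert (HB2 : (B ^ 2 <= rising_R x (S m) ^ 2 * c)%R).
  { eapply Rle_trans; [apply H|]. apply Rmult_le_compat_l; auto. apply pow2_ge_0. }
  assert (hg0 : (0 <= / (x * (x + 1)))%R) by (left; apply Rinv_0_lt_compat; nra).
  assert (G2 : ((/ (x * (x + 1))) ^ 2 <= (E * F / rising_R x (S m)) ^ 2)%R)
    by (apply pow_incr; lra).
  rewrite exp_Ropp. fold c.
  apply Rle_trans with ((E * F / rising_R x (S m)) ^ 2 * / c)%R.
  { rewrite Rmult_comm. apply Rmult_le_compat_r; auto. left; apply Rinv_0_lt_compat; auto. }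
  replace ((E * F / rising_R x (S m)) ^ 2 * / c)%R with
    ((E * F) ^ 2 / (rising_R x (S m) ^ 2 * c))%R by (field; lra).
  replace ((E * F / B) ^ 2)%R with ((E * F) ^ 2 / B ^ 2)%R by (field; lra).
  unfold Rdiv. apply Rmult_le_compat_l; [apply pow2_ge_0|].
  apply Rinv_le_contravar; auto. apply pow_lt; auto.
Qed.

Lemma Gamma_neq0 (w : C) : (2 <= Re w)%R -> Gamma w <> 0.
Proof.
  intros hw E.
  set (m := (exp (- (Im w ^ 2 / (Re w - 1))) * (/ (Re w * (Re w + 1))) ^ 2)%R).
  assert (hm : (0 < m)%R).
  { unfold m. apply Rmult_lt_0_compat; [apply exp_pos|]. apply pow_lt, Rinv_0_lt_compat. nra. }
  pose proof (Cseq_lim_Cmod _ _ (gauss_seq_lim w hw)) as H0.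
  assert (L0 : is_lim_seq (fun n => Cmod (gauss_seq n w) * Cmod (gauss_seq n w))%R
                 (Cmod (Gamma w) * Cmod (Gamma w))%R) by (apply is_lim_seq_mult'; auto).
  assert (Ev : eventually (fun n => m <= Cmod (gauss_seq n w) * Cmod (gauss_seq n w))%R).
  { exists 1%nat. intros [|n] hn; [lia|]. pose proof (Cmod_gauss_seq_lower w n hw). unfold m.
    simpl in *. lra. }
  pose proof (is_lim_seq_le_loc _ _ _ _ Ev (is_lim_seq_const m) L0) as H. simpl in H.
  rewrite E, Cmod_0 in H. lra.
Qed.

(** * The Dirichlet series of [zeta] *)

Definition zeta_term (s : C) (k : nat) : C := / cpowR (INR k + 1) s.

Lemma Cmod_zeta_term (s : C) (k : nat) : Cmod (zeta_term s k) = exp (- (Re s * ln (INR k + 1))).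
Proof. unfold zeta_term. rewrite Cmod_inv, Cmod_cpowR, exp_Ropp by apply cpowR_neq0. auto. Qed.

(* For [x >= 3]:
   [(j + 2) ^ (- x) <= 2 ^ (3 - x) (j + 2) ^ (- 3) <= 2 ^ (3 - x) / ((j + 2) (j + 3))]. *)
Lemma Cmod_zeta_term_le (s : C) (j : nat) : (3 <= Re s)%R ->
  (Cmod (zeta_term s (S j)) <= 8 * exp (- (Re s * ln 2)) / ((INR j + 2) * (INR j + 3)))%R.
Proof.
  intros hs. rewrite Cmod_zeta_term, S_INR. set (x := Re s).
  set (k := (INR j + 1 + 1)%R).
  assert (hk : (2 <= k)%R) by (unfold k; pose proof (pos_INR j); lra).
  replace (INR j + 2)%R with k by (unfold k; lra).
  replace (INR j + 3)%R with (k + 1)%R by (unfold k; lra).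
  assert (E1 : exp (x * ln k) = (exp ((x - 3) * ln k) * k ^ 3)%R).
  { rewrite <- (exp_ln (k ^ 3)) by (apply pow_lt; lra). rewrite ln_pow, <- exp_plus by lra.
    f_equal. simpl INR. ring. }
  assert (E2 : (exp ((x - 3) * ln 2) * 8 = exp (x * ln 2))%R).
  { replace 8%R with (2 ^ 3)%R by ring. rewrite <- (exp_ln (2 ^ 3)) at 1 by lra.
    rewrite ln_pow, <- exp_plus by lra. f_equal. simpl INR. ring. }
  assert (H3 : (exp ((x - 3) * ln 2) <= exp ((x - 3) * ln k))%R).
  { apply exp_le_mono. assert (ln 2 <= ln k)%R by (apply ln_le; lra).
    assert (0 <= x - 3)%R by (unfold x; lra). nra. }
  rewrite !exp_Ropp, E1, <- E2.
  pose proof (exp_pos ((x - 3) * ln 2)). pose proof (exp_pos ((x - 3) * ln k)).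
  replace (8 * / (exp ((x - 3) * ln 2) * 8) / (k * (k + 1)))%R with
    (/ (exp ((x - 3) * ln 2) * (k * (k + 1))))%R by (field; nra).
  apply Rinv_le_contravar; [nra|].
  apply Rmult_le_compat; nra.
Qed.

Lemma sum_n_telescope (N : nat) :
  sum_n (fun j => / ((INR j + 2) * (INR j + 3)))%R N = (/ 2 - / (INR N + 3))%R.
Proof.
  induction N as [|N IH].
  - rewrite sum_O. simpl. field.
  - rewrite sum_Sn, IH, S_INR. unfold plus; simpl. pose proof (pos_INR N). field. lra.
Qed.

Lemma is_series_telescope : is_series (fun j => / ((INR j + 2) * (INR j + 3)))%R (/ 2)%R.
Proof.
  unfold is_series.
  change (is_lim_seq (sum_n (fun j => / ((INR j + 2) * (INR j + 3)))%R) (/ 2)%R).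
  apply (is_lim_seq_ext (fun N => (/ 2 - / (INR N + 3))%R)).
  { intros; rewrite sum_n_telescope; auto. }
  assert (L : is_lim_seq (fun N => / (INR N + 3))%R 0%R).
  { replace (Finite 0) with (Rbar_inv p_infty) by reflexivity.
    apply is_lim_seq_inv; [|discriminate].
    replace p_infty with (Rbar_plus p_infty 3) by reflexivity.
    apply is_lim_seq_plus with p_infty 3;
      [apply is_lim_seq_INR | apply is_lim_seq_const | reflexivity]. }
  pose proof (is_lim_seq_minus' _ _ _ _ (is_lim_seq_const (/ 2)) L) as L'.
  rewrite Rminus_0_r in L'. exact L'.
Qed.

Lemma is_series_zeta (s : C) : (3 <= Re s)%R ->
  is_series (V := C_NormedModule) (zeta_term s) (zeta s).
Proof.
  intros hs. unfold zeta.
  apply (iota_correct (K := C_AbsRing) (V := C_CompleteNormedModule)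
           (fun l : C => is_series (V := C_NormedModule) (fun n : nat => / cpowR (INR n + 1) s) l)).
  assert (Hex : ex_series (V := C_NormedModule) (zeta_term s)).
  { apply (ex_series_incr_1 (V := C_NormedModule)).
    apply (ex_series_le (V := C_CompleteNormedModule) _
             (fun j => 8 * exp (- (Re s * ln 2)) * / ((INR j + 2) * (INR j + 3)))%R).
    - intros j. apply (Cmod_zeta_term_le s j hs).
    - exists (8 * exp (- (Re s * ln 2)) * / 2)%R.
      apply (is_series_scal_l (K := R_AbsRing) (V := R_NormedModule)), is_series_telescope. }
  destruct Hex as [l Hl]. exists l. split; auto.
  intros l' Hl'.
  apply (filterlim_locally_unique (K := C_AbsRing) (V := C_NormedModule) (F := eventually)
           (sum_n (zeta_term s))); auto.
Qed.

Lemma Cmod_is_series_le (a : nat -> C) (l : C) (B : R) :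
  is_series (V := C_NormedModule) a l -> (forall N, Cmod (sum_n a N) <= B)%R -> (Cmod l <= B)%R.
Proof.
  intros Hs HB. destruct (Rle_dec (Cmod l) B) as [h|h]; auto. exfalso.
  assert (he : (0 < (Cmod l - B) / 4)%R) by lra.
  destruct (Hs (ball l ((Cmod l - B) / 4)) (locally_ball l (mkposreal _ he))) as [N HN].
  specialize (HN N (Nat.le_refl N)). simpl in HN. apply ball_Cmod_lt in HN.
  specialize (HB N). pose proof (Cmod_triangle (sum_n a N) (- (sum_n a N - l))) as T.
  replace (sum_n a N + - (sum_n a N - l)) with l in T by ring. rewrite Cmod_opp in T.
  change (Cmod (sum_n a N - l) < 2 * ((Cmod l - B) / 4))%R in HN. lra.
Qed.

Lemma Cmod_zeta_sub_1_le (s : C) : (3 <= Re s)%R ->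
  (Cmod (zeta s - 1) <= 4 * exp (- (Re s * ln 2)))%R.
Proof.
  intros hs.
  assert (H1 : is_series (V := C_NormedModule) (fun k => zeta_term s (S k)) (zeta s - 1)).
  { apply (is_series_incr_1 (V := C_NormedModule)).
    replace (@plus C_NormedModule (zeta s - 1) (zeta_term s 0)) with (zeta s).
    - apply is_series_zeta; auto.
    - unfold zeta_term. replace (INR 0 + 1)%R with 1%R by (simpl; ring). rewrite cpowR_1_l.
      change (zeta s = zeta s - 1 + / 1). field. }
  apply (Cmod_is_series_le _ _ _ H1). intros N.
  set (c := exp (- (Re s * ln 2))). assert (hc : (0 < c)%R) by apply exp_pos.
  apply Rle_trans with (8 * c * (/ 2 - / (INR N + 3)))%R.
  2:{ assert (0 < / (INR N + 3))%R by (apply Rinv_0_lt_compat; pose proof (pos_INR N); lra). nra. }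
  induction N as [|N IH].
  - rewrite sum_O. eapply Rle_trans; [apply Cmod_zeta_term_le; auto|].
    fold c. simpl INR. right. field.
  - rewrite sum_Sn.
    change (Cmod (sum_n (fun k => zeta_term s (S k)) N + zeta_term s (S (S N)))
              <= 8 * c * (/ 2 - / (INR (S N) + 3)))%R.
    eapply Rle_trans; [apply Cmod_triangle|].
    eapply Rle_trans; [apply Rplus_le_compat; [apply IH | apply Cmod_zeta_term_le; auto]|].
    rewrite S_INR. pose proof (pos_INR N). right. fold c. field. lra.
Qed.

Lemma Cmod_zeta_bounds (u : C) : (18 <= Re u)%R -> (999/1000 <= Cmod (zeta u) <= 1001/1000)%R.
Proof.
  intros hu. pose proof (Cmod_zeta_sub_1_le u ltac:(lra)) as H.
  assert (E : (exp (- (Re u * ln 2)) <= / 2 ^ 18)%R).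
  { rewrite <- (exp_ln (2 ^ 18)), <- exp_Ropp, ln_pow by (try apply pow_lt; lra).
    assert (0 < ln 2)%R by (rewrite <- ln_1; apply ln_increasing; lra).
    apply exp_le_mono. replace (INR 18) with 18%R by (simpl; ring). nra. }
  assert (4 * / 2 ^ 18 < 1 / 1000)%R by (simpl; lra).
  pose proof (Cmod_triangle (zeta u - 1) 1) as T1.
  replace (zeta u - 1 + 1) with (zeta u) in T1 by ring.
  pose proof (Cmod_triangle (- (zeta u - 1)) (zeta u)) as T2.
  replace (- (zeta u - 1) + zeta u) with (RtoC 1) in T2 by ring.
  rewrite Cmod_opp in T2. rewrite Cmod_1 in T1, T2. lra.
Qed.

(** * The dominant term of [Z2] *)

Section Dominance.
Local Open Scope R_scope.

(* The variables stand for moduli at a point [s] with [Re s >= 20]: [ms = |s|], [mk = |s - k|],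
   [pk = |s + k|], [mh = |2 s - 1|], [a = |A s + 3|], [b = |A s - A - 3|], [e = sqrt pi],
   [P = pi ^ (- Re s / 2)], [Q = pi ^ (- Re s)], [G0 = |Gamma (s/2)|], [H = |Gamma ((s+1)/2)|],
   [K = |Gamma s|], [D = |Gamma (s - 1/2)|], the [z]'s are the values of [|zeta|] that occur,
   [r1 = sqrt (Re s / 2 + 1/4)] and [r2 = sqrt (Re s - 3/4)]; [Tk] is the modulus of the
   [k]-th term of [Z2] (see [Z2_expand]) written out with these quantities. *)
Variables ms m1 m2 m3 p1 p2 mh a b e P Q G0 H K D r1 r2 : R.
Variables z2s z2s1 zs2 zs1 zs zsm1 zsm2 T1 T2 T3 T4 T5 T6 : R.

Hypotheses (hms : 20 <= ms) (hm1 : 19 <= m1) (hm2 : 0 < m2) (hm3 : 0 < m3)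
  (hp1 : 21 <= p1) (hp2 : 22 <= p2) (h31 : m3 <= m1) (h32 : m3 <= m2) (hsp2 : ms <= p2)
  (hmh : 0 < mh) (ha : 3 <= a) (hb : 0 <= b) (hba : b <= a)
  (he : 0 < e) (he2 : e * e <= 4) (hP : 0 < P) (hQ : 0 < Q)
  (hG0 : 0 < G0) (hH : 0 <= H) (hK : 0 < K) (hD : 0 <= D)
  (hr1 : 32/10 <= r1) (hr2 : 438/100 <= r2) (HH : H * r1 <= ms / 2 * G0) (HD : D * r2 <= K).
Hypotheses (hz2s : 999/1000 <= z2s <= 1001/1000) (hz2s1 : 999/1000 <= z2s1 <= 1001/1000)
  (hzs2 : 999/1000 <= zs2 <= 1001/1000) (hzs1 : 999/1000 <= zs1 <= 1001/1000)
  (hzs : 999/1000 <= zs <= 1001/1000) (hzsm1 : 999/1000 <= zsm1 <= 1001/1000)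
  (hzsm2 : 999/1000 <= zsm2 <= 1001/1000).
Hypotheses
  (E1 : T1 = m2 * (2 * ms * mh * Q * K * z2s) * a * m1 ^ 2
             * (p2 * p1 * (P / (e * e)) * (ms / 2 * G0) * zs2))
  (E2 : T2 = 2 * m1 * m3 * (p1 * ms * (P / e) * H * zs1) * (m2 * (2 * ms * mh * Q * K * z2s)))
  (E3 : T3 = p2 * m3 * (ms * m1 * P * G0 * zs) * (m2 * (2 * ms * mh * Q * K * z2s)))
  (E4 : T4 = p1 * (mh * (2 * m1) * (Q * e) * D * z2s1) * b * ms ^ 2
             * (m2 * m3 * (P * (e * e)) * (G0 / (m2 / 2)) * zsm2))
  (E5 : T5 = p1 * (mh * (2 * m1) * (Q * e) * D * z2s1) * (2 * ms * p2)
             * (m1 * m2 * (P * e) * (H / (m1 / 2)) * zsm1))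
  (E6 : T6 = p1 * (mh * (2 * m1) * (Q * e) * D * z2s1) * (p2 * m3) * (ms * m1 * P * G0 * zs)).

Ltac pos_tac := unfold Rdiv; repeat first [apply Rmult_le_pos | apply Rmult_lt_0_compat
  | apply pow2_ge_0 | apply pow_lt | apply Rinv_0_lt_compat
  | (apply Rlt_le; apply Rinv_0_lt_compat)];
  try lra; try nra.
Ltac mono := repeat (apply Rmult_le_compat; [pos_tac | pos_tac | | ]); try lra.

Lemma e_le_2 : e <= 2.
Proof. nra. Qed.

Lemma H_le : H <= ms * G0 / (2 * r1).
Proof.
  apply (Rmult_le_reg_r r1); [lra|].
  replace (ms * G0 / (2 * r1) * r1) with (ms / 2 * G0) by (field; lra). lra.
Qed.

Lemma D_le : D <= K / r2.
Proof. apply (Rmult_le_reg_r r2); [lra|]. replace (K / r2 * r2) with K by (field; lra). lra. Qed.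

Lemma inv_r1_le : 1 / r1 <= 10/32.
Proof. apply (Rmult_le_reg_r r1); [lra|]. replace (1 / r1 * r1) with 1 by (field; lra). lra. Qed.

Lemma inv_r2_le : 1 / r2 <= 100/438.
Proof. apply (Rmult_le_reg_r r2); [lra|]. replace (1 / r2 * r2) with 1 by (field; lra). lra. Qed.

Lemma T2_le : T2 <= 45/100 * T1.
Proof.
  pose proof e_le_2. pose proof H_le. pose proof inv_r1_le.
  set (c := m2 * ms ^ 2 * mh * Q * K * z2s * m1 * p1 * P / (e * e)).
  assert (hc : 0 <= c) by (unfold c; pos_tac).
  replace T2 with (c * (4 * e * m3 * H * zs1)) by (rewrite E2; unfold c; field; lra).
  replace (45/100 * T1) with (c * (45/100 * a * m1 * p2 * G0 * zs2))
    by (rewrite E1; unfold c; field; lra).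
  apply Rmult_le_compat_l; auto.
  apply Rle_trans with (4 * 2 * m1 * (ms * G0 / (2 * r1)) * (1001/1000)); [mono|].
  apply Rle_trans with (45/100 * 3 * m1 * ms * G0 * (999/1000)); [|mono].
  replace (4 * 2 * m1 * (ms * G0 / (2 * r1)) * (1001 / 1000)) with
    ((m1 * ms * G0) * (4 * 1001/1000 * (1 / r1))) by (field; lra).
  replace (45 / 100 * 3 * m1 * ms * G0 * (999 / 1000)) with
    ((m1 * ms * G0) * (45/100 * 3 * (999/1000))) by ring.
  apply Rmult_le_compat_l; [pos_tac | lra].
Qed.

Lemma T3_le : T3 <= 14/100 * T1.
Proof.
  pose proof e_le_2. assert (hi4 : / 4 <= / (e * e)) by (apply Rinv_le_contravar; nra).
  set (c := m2 * ms ^ 2 * mh * Q * K * z2s * m1 * P * G0).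
  assert (hc : 0 <= c) by (unfold c; pos_tac).
  replace T3 with (c * (2 * p2 * m3 * zs)) by (rewrite E3; unfold c; field; lra).
  replace (14/100 * T1) with (c * (14/100 * a * m1 * p2 * p1 * zs2 * / (e * e)))
    by (rewrite E1; unfold c; field; lra).
  apply Rmult_le_compat_l; auto.
  apply Rle_trans with (2 * p2 * m1 * (1001/1000)); [mono|].
  apply Rle_trans with (14/100 * 3 * m1 * p2 * 21 * (999/1000) * / 4); [|mono].
  replace (2 * p2 * m1 * (1001 / 1000)) with ((m1 * p2) * (2 * (1001/1000))) by ring.
  replace (14 / 100 * 3 * m1 * p2 * 21 * (999 / 1000) * / 4) with
    ((m1 * p2) * (14/100 * 3 * 21 * (999/1000) / 4)) by field.
  apply Rmult_le_compat_l; [pos_tac | lra].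
Qed.

Lemma T4_le : T4 <= 8/100 * T1.
Proof.
  pose proof e_le_2. pose proof D_le. pose proof inv_r2_le.
  set (c := mh * Q * ms ^ 2 * m1 * p1 * P * G0 / (e * e)).
  assert (hc : 0 <= c) by (unfold c; pos_tac).
  replace T4 with (c * (4 * e * e * e * e * e * D * z2s1 * b * m3 * zsm2))
    by (rewrite E4; unfold c; field; lra).
  replace (8/100 * T1) with (c * (8/100 * m2 * K * z2s * a * m1 * p2 * zs2))
    by (rewrite E1; unfold c; field; lra).
  apply Rmult_le_compat_l; auto.
  apply Rle_trans with (4 * 2 * 2 * 2 * 2 * 2 * (K / r2) * (1001/1000) * a * m2 * (1001/1000));
    [mono|].
  apply Rle_trans with (8/100 * m2 * K * (999/1000) * a * 19 * 22 * (999/1000)); [|mono].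
  replace (4 * 2 * 2 * 2 * 2 * 2 * (K / r2) * (1001 / 1000) * a * m2 * (1001 / 1000)) with
    ((a * m2 * K) * (128 * (1001/1000) * (1001/1000) * (1 / r2))) by (field; lra).
  replace (8 / 100 * m2 * K * (999 / 1000) * a * 19 * 22 * (999 / 1000)) with
    ((a * m2 * K) * (8/100 * (999/1000) * 19 * 22 * (999/1000))) by ring.
  apply Rmult_le_compat_l; [pos_tac | lra].
Qed.

Lemma T5_le : T5 <= 9/100 * T1.
Proof.
  pose proof e_le_2. pose proof H_le. pose proof D_le. pose proof inv_r1_le. pose proof inv_r2_le.
  assert (ir12 : 1 / (r1 * r2) <= 10/32 * (100/438)).
  { replace (1 / (r1 * r2)) with ((1 / r1) * (1 / r2)) by (field; lra).
    apply Rmult_le_compat; try lra; pos_tac. }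
  set (c := p1 * mh * m1 * Q * ms * m2 * P / (e * e)).
  assert (hc : 0 <= c) by (unfold c; pos_tac).
  replace T5 with (c * (8 * e * e * e * e * D * z2s1 * p2 * H * zsm1))
    by (rewrite E5; unfold c; field; lra).
  replace (9/100 * T1) with (c * (9/100 * ms * K * z2s * a * m1 * p2 * G0 * zs2))
    by (rewrite E1; unfold c; field; lra).
  apply Rmult_le_compat_l; auto.
  apply Rle_trans with
    (8 * 2 * 2 * 2 * 2 * (K / r2) * (1001/1000) * p2 * (ms * G0 / (2 * r1)) * (1001/1000)); [mono|].
  apply Rle_trans with (9/100 * ms * K * (999/1000) * 3 * 19 * p2 * G0 * (999/1000)); [|mono].
  replace (8 * 2 * 2 * 2 * 2 * (K / r2) * (1001 / 1000) * p2 * (ms * G0 / (2 * r1)) * (1001 / 1000))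
    with ((ms * K * p2 * G0) * (64 * (1001/1000) * (1001/1000) * (1 / (r1 * r2)))) by (field; lra).
  replace (9 / 100 * ms * K * (999 / 1000) * 3 * 19 * p2 * G0 * (999 / 1000)) with
    ((ms * K * p2 * G0) * (9/100 * (999/1000) * 3 * 19 * (999/1000))) by ring.
  apply Rmult_le_compat_l; [pos_tac | lra].
Qed.

Lemma T6_le : T6 <= 7/100 * T1.
Proof.
  pose proof e_le_2. pose proof D_le. pose proof inv_r2_le.
  set (c := p1 * mh * m1 ^ 2 * Q * p2 * ms * P * G0 / (e * e)).
  assert (hc : 0 <= c) by (unfold c; pos_tac).
  replace T6 with (c * (2 * e * e * e * D * z2s1 * m3 * zs)) by (rewrite E6; unfold c; field; lra).
  replace (7/100 * T1) with (c * (7/100 * m2 * ms * K * z2s * a * zs2))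
    by (rewrite E1; unfold c; field; lra).
  apply Rmult_le_compat_l; auto.
  apply Rle_trans with (2 * 2 * 2 * 2 * (K / r2) * (1001/1000) * m2 * (1001/1000)); [mono|].
  apply Rle_trans with (7/100 * m2 * 20 * K * (999/1000) * 3 * (999/1000)); [|mono].
  replace (2 * 2 * 2 * 2 * (K / r2) * (1001 / 1000) * m2 * (1001 / 1000)) with
    ((m2 * K) * (16 * (1001/1000) * (1001/1000) * (1 / r2))) by (field; lra).
  replace (7 / 100 * m2 * 20 * K * (999 / 1000) * 3 * (999 / 1000)) with
    ((m2 * K) * (7/100 * 20 * (999/1000) * 3 * (999/1000))) by ring.
  apply Rmult_le_compat_l; [pos_tac | lra].
Qed.

Lemma T1_pos : 0 < T1.
Proof.
  rewrite E1. unfold Rdiv. repeat apply Rmult_lt_0_compat; try lra; try (apply pow_lt; lra);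
    try (apply Rinv_0_lt_compat; nra).
Qed.

Lemma dominance : T2 + T3 + T4 + T5 + T6 < T1.
Proof. pose proof T1_pos. pose proof T2_le. pose proof T3_le. pose proof T4_le.
  pose proof T5_le. pose proof T6_le. lra. Qed.

End Dominance.

Lemma Cmod_chi (u : C) : Cmod (chi u) =
  (Cmod u * Cmod (u - 1) * exp (Re (- u / 2) * ln PI) * Cmod (Gamma (u / 2)) * Cmod (zeta u))%R.
Proof. unfold chi, xi. rewrite !Cmod_mult, Cmod_cpowR. ring. Qed.

Lemma C2_neq0 : (2 : C) <> 0.
Proof. intro H. apply RtoC_inj in H. lra. Qed.

Lemma Cmod_mul_2 (z : C) : Cmod (2 * z) = (2 * Cmod z)%R.
Proof. rewrite Cmod_mult, Cmod_R, Rabs_right; lra. Qed.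

Lemma Cmod_div_2 (z : C) : Cmod (z / 2) = (Cmod z / 2)%R.
Proof. rewrite Cmod_div by apply C2_neq0. rewrite Cmod_R, Rabs_right; lra. Qed.

Lemma Re_div_2 (u : C) : Re (u / 2) = (Re u / 2)%R.
Proof. destruct u as [a b]. unfold Cdiv, Cinv, Cmult; simpl. field. Qed.

Lemma Cmod_sub5_ge (a b c d f g : C) :
  (Cmod a - Cmod b - Cmod c - Cmod d - Cmod f - Cmod g <= Cmod (a - b - c - d - f - g))%R.
Proof.
  pose proof (Cmod_triangle (a - b - c - d - f - g) (b + c + d + f + g)) as T.
  replace (a - b - c - d - f - g + (b + c + d + f + g)) with a in T by ring.
  pose proof (Cmod_triangle (b + c + d + f) g). pose proof (Cmod_triangle (b + c + d) f).
  pose proof (Cmod_triangle (b + c) d). pose proof (Cmod_triangle b c). lra.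
Qed.

Definition Z2_term1 (s : C) : C := (s - 2) * chi (2 * s) * (A * s + 3) * (s - 1) ^ 2 * chi (s + 2).
Definition Z2_term2 (s : C) : C := 2 * (s - 1) * (s - 3) * chi (s + 1) * ((s - 2) * chi (2 * s)).
Definition Z2_term3 (s : C) : C := (s + 2) * (s - 3) * chi s * ((s - 2) * chi (2 * s)).
Definition Z2_term4 (s : C) : C :=
  (s + 1) * chi (2 * s - 1) * (A * s - A - 3) * s ^ 2 * chi (s - 2).
Definition Z2_term5 (s : C) : C := (s + 1) * chi (2 * s - 1) * (2 * s * (s + 2)) * chi (s - 1).
Definition Z2_term6 (s : C) : C := (s + 1) * chi (2 * s - 1) * ((s + 2) * (s - 3)) * chi s.

Lemma Z2_expand (s : C) :
  Z2 s = Z2_term1 s - Z2_term2 s - Z2_term3 s - Z2_term4 s - Z2_term5 s - Z2_term6 s.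
Proof.
  unfold Z2, Z2_term1, Z2_term2, Z2_term3, Z2_term4, Z2_term5, Z2_term6. ring.
Qed.

Section Z2_terms.
Variable s : C.

Let x := Re s.
Let L := ln PI.
Let e := exp (L / 2).
Let P := exp ((- x / 2) * L).
Let Q := exp ((- x) * L).

Lemma sqrt_PI_sq : (e * e = PI)%R.
Proof.
  unfold e. rewrite <- exp_plus. replace (L / 2 + L / 2)%R with L by field.
  apply exp_ln, PI_RGT_0.
Qed.

Lemma exp_mul_L_split (c d : R) : exp ((c + d) * L) = (exp (c * L) * exp (d * L))%R.
Proof. rewrite <- exp_plus. f_equal. ring. Qed.

Lemma exp_L_m1 : exp ((-1) * L) = (/ (e * e))%R.
Proof.
  rewrite sqrt_PI_sq. replace ((-1) * L)%R with (- L)%R by ring.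
  unfold L. rewrite exp_Ropp, exp_ln; auto. apply PI_RGT_0.
Qed.

Lemma exp_L_mhalf : exp ((-1/2) * L) = (/ e)%R.
Proof. unfold e. rewrite <- exp_Ropp. f_equal. field. Qed.

Lemma exp_L_half : exp ((1/2) * L) = e.
Proof. unfold e. f_equal. field. Qed.

Lemma exp_L_1 : exp (1 * L) = (e * e)%R.
Proof. rewrite sqrt_PI_sq, Rmult_1_l. apply exp_ln, PI_RGT_0. Qed.

Ltac re_tac := destruct s as [sx sy]; unfold x; simpl; field.

Lemma Cmod_chi_2s : Cmod (chi (2 * s)) =
  (2 * Cmod s * Cmod (2 * s - 1) * Q * Cmod (Gamma s) * Cmod (zeta (2 * s)))%R.
Proof.
  rewrite Cmod_chi, Cmod_mul_2.
  replace (2 * s / 2) with s by (field; apply C2_neq0).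
  replace (Re (- (2 * s) / 2)) with (- x)%R by re_tac. fold L. unfold Q. ring.
Qed.

Lemma Cmod_chi_2s_sub_1 : Cmod (chi (2 * s - 1)) =
  (Cmod (2 * s - 1) * (2 * Cmod (s - 1)) * (Q * e) * Cmod (Gamma (s - RtoC (1/2)))
   * Cmod (zeta (2 * s - 1)))%R.
Proof.
  rewrite Cmod_chi. replace (2 * s - 1 - 1) with (2 * (s - 1)) by ring. rewrite Cmod_mul_2.
  replace ((2 * s - 1) / 2) with (s - RtoC (1/2))
    by (rewrite RtoC_div by (intro; lra); field; apply C2_neq0).
  replace (Re (- (2 * s - 1) / 2)) with (- x + 1/2)%R by re_tac. fold L.
  rewrite exp_mul_L_split, exp_L_half. unfold Q. ring.
Qed.

Lemma Cmod_chi_s_add_1 : Cmod (chi (s + 1)) =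
  (Cmod (s + 1) * Cmod s * (P / e) * Cmod (Gamma (s / 2 + RtoC (1/2))) * Cmod (zeta (s + 1)))%R.
Proof.
  rewrite Cmod_chi. replace (s + 1 - 1) with s by ring.
  replace ((s + 1) / 2) with (s / 2 + RtoC (1/2))
    by (rewrite RtoC_div by (intro; lra); field; apply C2_neq0).
  replace (Re (- (s + 1) / 2)) with (- x / 2 + (-1/2))%R by re_tac. fold L.
  rewrite exp_mul_L_split, exp_L_mhalf. unfold P, Rdiv. ring.
Qed.

Lemma Cmod_chi_s : Cmod (chi s) =
  (Cmod s * Cmod (s - 1) * P * Cmod (Gamma (s / 2)) * Cmod (zeta s))%R.
Proof.
  rewrite Cmod_chi. replace (Re (- s / 2)) with (- x / 2)%R by re_tac. fold L. unfold P. ring.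
Qed.

Lemma Cmod_add_ge (k : R) : (x + k <= Cmod (s + RtoC k))%R.
Proof. replace (x + k)%R with (Re (s + RtoC k)) by re_tac. apply Re_le_Cmod. Qed.

Lemma Cmod_sub_ge (k : R) : (x - k <= Cmod (s - RtoC k))%R.
Proof. replace (x - k)%R with (Re (s - RtoC k)) by re_tac. apply Re_le_Cmod. Qed.

Lemma Cmod_add_sq (k : R) : (Cmod (s + RtoC k) ^ 2 = (x + k) ^ 2 + Im s ^ 2)%R.
Proof. rewrite Cmod2_alt. unfold x. destruct s; simpl; ring. Qed.

Lemma Cmod_sub_sq (k : R) : (Cmod (s - RtoC k) ^ 2 = (x - k) ^ 2 + Im s ^ 2)%R.
Proof. rewrite Cmod2_alt. unfold x. destruct s; simpl; ring. Qed.

Hypothesis hs : (20 <= Re s)%R.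

Lemma Cmod_sub_neq0 (k : R) : (k < 20)%R -> Cmod (s - RtoC k) <> 0%R.
Proof.
  intros hk E. apply Cmod_eq_0 in E. assert (Re (s - RtoC k) = 0%R) by (rewrite E; auto).
  replace (Re (s - RtoC k)) with (Re s - k)%R in H by re_tac. lra.
Qed.

Lemma Cmod_chi_s_add_2 : Cmod (chi (s + 2)) =
  (Cmod (s + 2) * Cmod (s + 1) * (P / (e * e)) * (Cmod s / 2 * Cmod (Gamma (s / 2)))
   * Cmod (zeta (s + 2)))%R.
Proof.
  rewrite Cmod_chi. replace (s + 2 - 1) with (s + 1) by ring.
  replace ((s + 2) / 2) with (s / 2 + 1) by (field; apply C2_neq0).
  rewrite Gamma_plus_1, Cmod_mult, Cmod_div_2 by (rewrite Re_div_2; lra).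
  replace (Re (- (s + 2) / 2)) with (- x / 2 + (-1))%R by re_tac. fold L.
  rewrite exp_mul_L_split, exp_L_m1. unfold P, Rdiv. ring.
Qed.

Lemma Cmod_chi_s_sub_1 : Cmod (chi (s - 1)) =
  (Cmod (s - 1) * Cmod (s - 2) * (P * e) * (Cmod (Gamma (s / 2 + RtoC (1/2))) / (Cmod (s - 1) / 2))
   * Cmod (zeta (s - 1)))%R.
Proof.
  pose proof (Cmod_sub_neq0 1 ltac:(lra)).
  rewrite Cmod_chi. replace (s - 1 - 1) with (s - 2) by ring.
  replace (s / 2 + RtoC (1/2)) with ((s - 1) / 2 + 1)
    by (rewrite RtoC_div by (intro; lra); field; apply C2_neq0).
  rewrite Gamma_plus_1, Cmod_mult, Cmod_div_2
    by (rewrite Re_div_2; replace (Re (s - 1)) with (Re s - 1)%R by re_tac; lra).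
  replace (Re (- (s - 1) / 2)) with (- x / 2 + 1/2)%R by re_tac. fold L.
  rewrite exp_mul_L_split, exp_L_half. unfold P. field. auto.
Qed.

Lemma Cmod_chi_s_sub_2 : Cmod (chi (s - 2)) =
  (Cmod (s - 2) * Cmod (s - 3) * (P * (e * e)) * (Cmod (Gamma (s / 2)) / (Cmod (s - 2) / 2))
   * Cmod (zeta (s - 2)))%R.
Proof.
  pose proof (Cmod_sub_neq0 2 ltac:(lra)).
  rewrite Cmod_chi. replace (s - 2 - 1) with (s - 3) by ring.
  replace (s / 2) with ((s - 2) / 2 + 1) by (field; apply C2_neq0).
  rewrite Gamma_plus_1, Cmod_mult, Cmod_div_2
    by (rewrite Re_div_2; replace (Re (s - 2)) with (Re s - 2)%R by re_tac; lra).
  replace (Re (- (s - 2) / 2)) with (- x / 2 + 1)%R by re_tac. fold L.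
  rewrite exp_mul_L_split, exp_L_1. unfold P. field. auto.
Qed.

Lemma Cmod_A_bounds : (3 <= Cmod (A * s + 3) /\ Cmod (A * s - A - 3) <= Cmod (A * s + 3))%R.
Proof.
  pose proof PI_4. assert (3 < PI)%R by (pose proof PI2_3_2; lra).
  set (al := (PI / 3 - 1)%R). assert (0 <= al)%R by (unfold al; lra).
  assert (ReA : Re (A * s + 3) = (al * x + 3)%R) by (unfold A, al, x; destruct s; simpl; ring).
  assert (ImA : Im (A * s + 3) = (al * Im s)%R) by (unfold A, al; destruct s; simpl; ring).
  assert (ReB : Re (A * s - A - 3) = (al * (x - 1) - 3)%R)
    by (unfold A, al, x; destruct s; simpl; ring).
  assert (ImB : Im (A * s - A - 3) = (al * Im s)%R) by (unfold A, al; destruct s; simpl; ring).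
  split.
  - pose proof (Re_le_Cmod (A * s + 3)) as R3. rewrite ReA in R3. unfold x in *. nra.
  - apply Cmod_le_of_sq. rewrite !Cmod2_alt, ReA, ImA, ReB, ImB. unfold x in *. nra.
Qed.

Lemma Cmod_Gamma_add_half_le : (Cmod (Gamma (s / 2 + RtoC (1/2))) * sqrt (x / 2 + 1/4)
                             <= Cmod s / 2 * Cmod (Gamma (s / 2)))%R.
Proof.
  assert (Rw : Re (s / 2 + RtoC (1/2)) = (x / 2 + 1/2)%R)
    by (rewrite re_plus, Re_div_2, re_RtoC; unfold x; lra).
  pose proof (Cmod_Gamma_half_shift (s / 2 + RtoC (1/2))
                ltac:(rewrite Rw; unfold x in *; lra)) as G.
  replace (s / 2 + RtoC (1/2) + RtoC (1/2)) with (s / 2 + 1) in G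
    by (rewrite <- Cplus_assoc, <- RtoC_plus; f_equal; f_equal; field).
  rewrite Gamma_plus_1, Cmod_mult, Cmod_div_2, Rw in G by (rewrite Re_div_2; unfold x in *; lra).
  replace (x / 2 + 1 / 2 - 1 / 4)%R with (x / 2 + 1/4)%R in G by field.
  pose proof (Cmod_ge_0 s). pose proof (Cmod_ge_0 (Gamma (s / 2))).
  apply le_of_pow2_le; [apply Rmult_le_pos; [apply Cmod_ge_0 | apply sqrt_pos] | nra |].
  rewrite Rpow_mult_distr, pow2_sqrt by (unfold x in *; lra). exact G.
Qed.

Lemma Cmod_Gamma_sub_half_le : (Cmod (Gamma (s - RtoC (1/2))) * sqrt (x - 3/4) <= Cmod (Gamma s))%R.
Proof.
  assert (Rw : Re (s - RtoC (1/2)) = (x - 1/2)%R) by re_tac.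
  pose proof (Cmod_Gamma_half_shift (s - RtoC (1/2)) ltac:(rewrite Rw; unfold x in *; lra)) as G.
  replace (s - RtoC (1/2) + RtoC (1/2)) with s in G by ring.
  rewrite Rw in G. replace (x - 1 / 2 - 1 / 4)%R with (x - 3/4)%R in G by field.
  apply le_of_pow2_le; [apply Rmult_le_pos; [apply Cmod_ge_0 | apply sqrt_pos] | apply Cmod_ge_0 |].
  rewrite Rpow_mult_distr, pow2_sqrt by (unfold x in *; lra). exact G.
Qed.

End Z2_terms.

Lemma Z2_minor_lt_main (s : C) : (20 <= Re s)%R ->
  (Cmod (Z2_term2 s) + Cmod (Z2_term3 s) + Cmod (Z2_term4 s) + Cmod (Z2_term5 s)
   + Cmod (Z2_term6 s) < Cmod (Z2_term1 s))%R.
Proof.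
  intros hs.
  assert (Re2 : forall k : R, Re (2 * s - RtoC k) = (2 * Re s - k)%R)
    by (intros; destruct s; simpl; ring).
  assert (Rea : forall k : R, Re (s + RtoC k) = (Re s + k)%R) by (intros; destruct s; simpl; ring).
  assert (Res : forall k : R, Re (s - RtoC k) = (Re s - k)%R) by (intros; destruct s; simpl; ring).
  assert (Re2s : Re (2 * s) = (2 * Re s)%R) by (destruct s; simpl; ring).
  assert (Cmod2 : Cmod 2 = 2%R) by (rewrite Cmod_R, Rabs_right; lra).
  destruct (Cmod_A_bounds s hs) as [HA HB].
  pose proof sqrt_PI_sq. pose proof PI_4. pose proof (Re_le_Cmod s).
  pose proof (Cmod_sub_ge s 1). pose proof (Cmod_sub_ge s 2). pose proof (Cmod_sub_ge s 3).
  pose proof (Cmod_add_ge s 1). pose proof (Cmod_add_ge s 2).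
  apply (dominance (Cmod s) (Cmod (s - 1)) (Cmod (s - 2)) (Cmod (s - 3)) (Cmod (s + 1))
    (Cmod (s + 2)) (Cmod (2 * s - 1)) (Cmod (A * s + 3)) (Cmod (A * s - A - 3))
    (exp (ln PI / 2)%R) (exp ((- Re s / 2) * ln PI)%R) (exp ((- Re s) * ln PI)%R)
    (Cmod (Gamma (s / 2))) (Cmod (Gamma (s / 2 + RtoC (1/2)))) (Cmod (Gamma s))
    (Cmod (Gamma (s - RtoC (1/2)))) (sqrt (Re s / 2 + 1/4)%R) (sqrt (Re s - 3/4)%R)
    (Cmod (zeta (2 * s))) (Cmod (zeta (2 * s - 1))) (Cmod (zeta (s + 2))) (Cmod (zeta (s + 1)))
    (Cmod (zeta s)) (Cmod (zeta (s - 1))) (Cmod (zeta (s - 2))));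
    try lra; try apply exp_pos; try apply Cmod_ge_0;
    try (apply Cmod_zeta_bounds; rewrite ?Re2s, ?Re2, ?Rea, ?Res; lra);
    try (unfold Z2_term1, Z2_term2, Z2_term3, Z2_term4, Z2_term5, Z2_term6;
         rewrite !Cmod_mult, ?Cmod_pow, ?Cmod2, ?(Cmod_chi_2s s), ?(Cmod_chi_2s_sub_1 s),
           ?(Cmod_chi_s_add_2 s hs), ?(Cmod_chi_s_add_1 s), ?(Cmod_chi_s_sub_1 s hs),
           ?(Cmod_chi_s_sub_2 s hs), ?(Cmod_chi_s s); ring).
  - apply Cmod_le_of_sq. rewrite !Cmod_sub_sq. nra.
  - apply Cmod_le_of_sq. rewrite !Cmod_sub_sq. nra.
  - apply Cmod_le_of_sq. rewrite (Cmod_add_sq s 2), <- (Cplus_0_r s) at 1.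
    rewrite (Cmod_add_sq s 0). nra.
  - apply Cmod_gt_0. intro E. pose proof (Re2 1%R) as R1. rewrite E in R1. simpl in R1. lra.
  - apply Cmod_gt_0, Gamma_neq0. rewrite Re_div_2. lra.
  - apply Cmod_gt_0, Gamma_neq0. lra.
  - apply sqrt_ge; lra.
  - apply sqrt_ge; lra.
  - apply Cmod_Gamma_add_half_le; auto.
  - apply Cmod_Gamma_sub_half_le; auto.
Qed.

Theorem proposition6p4 :
  forall s : C, (20 <= Re s)%R -> Z2 s <> 0.
Proof.
  intros s hs HZ.
  pose proof (Cmod_sub5_ge (Z2_term1 s) (Z2_term2 s) (Z2_term3 s) (Z2_term4 s) (Z2_term5 s)
                (Z2_term6 s)) as T.
  rewrite <- Z2_expand, HZ, Cmod_0 in T.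
  pose proof (Z2_minor_lt_main s hs). lra.
Qed.
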